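(* Let $\mathcal{H},\mathcal{G},\mathcal{K}$ be real Hilbert spaces. Let $f:\mathcal{H}\to\mathbb{R}\cup\{+\infty\}$ be proper, convex, lower semicontinuous and $\gamma$-strongly convex for some $\gamma>0$; let $g:\mathcal{G}\to\mathbb{R}\cup\{+\infty\}$ be proper, convex and lower semicontinuous; let $h_1:\mathcal{H}\to\mathbb{R}$ be convex and Fréchet differentiable with $L_1$-Lipschitz continuous gradient ($L_1\ge 0$); let $h_2:\mathcal{G}\to\mathbb{R}$ be convex and Fréchet differentiable with $L_2$-Lipschitz continuous gradient ($L_2\ge 0$); let $A:\mathcal{H}\to\mathcal{K}$, $B:\mathcal{G}\to\mathcal{K}$ be bounded linear operators with $A\neq 0$, and $b\in\mathcal{K}$. Assume that the set of saddle points of the Lagrangian $L$ (defined in the context) is nonempty. Let $(M_1^k)_{k\ge0}\subseteq\mathcal{S}_+(\mathcal{H})$, $(M_2^k)_{k\ge0}\subseteq\mathcal{S}_+(\mathcal{G})$ satisfy, for all $k\ge 0$: $M_1^k-\frac{L_1}{2}\mathrm{Id}\in\mathcal{S}_+(\mathcal{H})$, $M_1^k\succcurlyeq M_1^{k+1}$, $M_2^k-\frac{L_2}{2}\mathrm{Id}\in\mathcal{S}_+(\mathcal{G})$, $M_2^k\succcurlyeq M_2^{k+1}$. Let $(c_k)_{k\ge0}$ be monotonically decreasing with $\epsilon\le c_k\le \frac{2\gamma}{\|A\|^2}-\epsilon$ for all $k\ge0$, where $\epsilon\in(0,\gamma/\|A\|^2)$. Suppose that at least one of the following holds: (i) there exists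 $\alpha>0$ with $M_2^k-\frac{L_2}{2}\mathrm{Id}\in\mathcal{P}_\alpha(\mathcal{G})$ for all $k\ge0$; (ii) there exists $\beta>0$ with $B^*B\in\mathcal{P}_\beta(\mathcal{G})$. Then any sequence $(x^k,z^k,p^k)_{k\ge0}$ generated by the Proximal AMA iteration (see context), from any starting point $(x^0,z^0,p^0)\in\mathcal{H}\times\mathcal{G}\times\mathcal{K}$, converges weakly to a saddle point of $L$.
   Context: Notation: $\mathcal{S}_+(\mathcal{H})$ is the set of bounded linear self-adjoint positive semidefinite operators on $\mathcal{H}$; for $M\in\mathcal{S}_+(\mathcal{H})$, $\|x\|_M=\sqrt{\langle x,Mx\rangle}$; $M_1\succcurlyeq M_2$ means $\|x\|_{M_1}^2\ge\|x\|_{M_2}^2$ for all $x$; $\mathcal{P}_\alpha(\mathcal{H})=\{M\in\mathcal{S}_+(\mathcal{H}): M\succcurlyeq\alpha\,\mathrm{Id}\}$. $f$ is $\gamma$-strongly convex means $f-\frac{\gamma}{2}\|\cdot\|^2$ is convex. The problem is $\min_{x\in\mathcal{H},z\in\mathcal{G}} f(x)+h_1(x)+g(z)+h_2(z)$ subject to $Ax+Bz=b$. Its Lagrangian is $L(x,z,p)=f(x)+h_1(x)+g(z)+h_2(z)+\langle p,b-Ax-Bz\rangle$ on $\mathcal{H}\times\mathcal{G}\times\mathcal{K}$; $(x^*,z^*,p^* )$ is a saddle point if $L(x^*,z^*,p)\le L(x^*,z^*,p^* )\le L(x,z,p^* )$ for all $(x,z,p)$. Proximal AMA: given $(x^0,z^0,p^0)$,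 for all $k\ge0$, $x^{k+1}=\operatorname{argmin}_{x\in\mathcal{H}}\{f(x)-\langle p^k,Ax\rangle+\langle x-x^k,\nabla h_1(x^k)\rangle+\frac12\|x-x^k\|^2_{M_1^k}\}$, $z^{k+1}\in\operatorname{argmin}_{z\in\mathcal{G}}\{g(z)-\langle p^k,Bz\rangle+\frac{c_k}{2}\|Ax^{k+1}+Bz-b\|^2+\langle z-z^k,\nabla h_2(z^k)\rangle+\frac12\|z-z^k\|^2_{M_2^k}\}$, $p^{k+1}=p^k+c_k(b-Ax^{k+1}-Bz^{k+1})$. *)

From Stdlib Require Import Reals Lra.
Open Scope R_scope.

Record Hilbert := {
  hcar :> Type;
  vzero : hcar;
  vadd : hcar -> hcar -> hcar;
  vopp : hcar -> hcar;
  vscal : R -> hcar -> hcar;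
  inner : hcar -> hcar -> R;
  vadd_assoc : forall x y z, vadd x (vadd y z) = vadd (vadd x y) z;
  vadd_comm : forall x y, vadd x y = vadd y x;
  vadd_0l : forall x, vadd vzero x = x;
  vadd_oppl : forall x, vadd (vopp x) x = vzero;
  vscal_assoc : forall a b x, vscal a (vscal b x) = vscal (a * b) x;
  vscal_1 : forall x, vscal 1 x = x;
  vscal_distr_v : forall a x y, vscal a (vadd x y) = vadd (vscal a x) (vscal a y);
  vscal_distr_s : forall a b x, vscal (a + b) x = vadd (vscal a x) (vscal b x);
  inner_sym : forall x y, inner x y = inner y x;
  inner_add_l : forall x y z, inner (vadd x y) z = inner x z + inner y z;
  inner_scal_l : forall a x y, inner (vscal a x) y = a * inner x y;
  inner_pos : forall x, 0 <= inner x x;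
  inner_def : forall x, inner x x = 0 -> x = vzero;
  hcomplete : forall u : nat -> hcar,
    (forall eps, 0 < eps -> exists N, forall m n, (N <= m)%nat -> (N <= n)%nat ->
        sqrt (inner (vadd (u m) (vopp (u n))) (vadd (u m) (vopp (u n)))) < eps) ->
    exists l, forall eps, 0 < eps -> exists N, forall n, (N <= n)%nat ->
        sqrt (inner (vadd (u n) (vopp l)) (vadd (u n) (vopp l))) < eps
}.

Arguments vzero {_}.
Arguments vadd {_} _ _.
Arguments vopp {_} _.
Arguments vscal {_} _ _.
Arguments inner {_} _ _.

Definition vsub {H : Hilbert} (x y : H) : H := vadd x (vopp y).
Definition hnorm {H : Hilbert} (x : H) : R := sqrt (inner x x).

Inductive ER := Fin (r : R) | PInf.

Definition ERle (a b : ER) : Prop :=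
  match a, b with
  | _, PInf => True
  | PInf, Fin _ => False
  | Fin x, Fin y => x <= y
  end.

Definition ERaddR (a : ER) (r : R) : ER :=
  match a with Fin x => Fin (x + r) | PInf => PInf end.

Definition ERadd (a b : ER) : ER :=
  match a, b with Fin x, Fin y => Fin (x + y) | _, _ => PInf end.

Definition proper {H : Hilbert} (f : H -> ER) : Prop := exists x, f x <> PInf.

(* convexity: f(tx+(1-t)y) <= t f x + (1-t) f y (via the epigraph, with the
   convention t*(+oo) = +oo for t>0 and 0*(+oo)=0 handled by real bounds) *)
Definition convex {H : Hilbert} (f : H -> ER) : Prop :=
  forall (x y : H) (t a b : R), 0 <= t <= 1 ->
    ERle (f x) (Fin a) -> ERle (f y) (Fin b) ->
    ERle (f (vadd (vscal t x) (vscal (1 - t) y))) (Fin (t * a + (1 - t) * b)).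

Definition strongly_convex {H : Hilbert} (gamma : R) (f : H -> ER) : Prop :=
  convex (fun x => ERaddR (f x) (- (gamma / 2) * (hnorm x) ^ 2)).

Definition lsc {H : Hilbert} (f : H -> ER) : Prop :=
  forall (x : H) (a : R), ~ ERle (f x) (Fin a) ->
    exists delta, 0 < delta /\
      forall y, hnorm (vsub y x) < delta -> ~ ERle (f y) (Fin a).

Definition convex_real {H : Hilbert} (h : H -> R) : Prop :=
  convex (fun x => Fin (h x)).

Definition frechet_gradient {H : Hilbert} (h : H -> R) (grad : H -> H) : Prop :=
  forall x eps, 0 < eps -> exists delta, 0 < delta /\
    forall d : H, hnorm d < delta ->
      Rabs (h (vadd x d) - h x - inner (grad x) d) <= eps * hnorm d.

Definition lipschitz {H1 H2 : Hilbert} (Lc : R) (F : H1 -> H2) : Prop :=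
  forall x y, hnorm (vsub (F x) (F y)) <= Lc * hnorm (vsub x y).

Definition linear_op {H1 H2 : Hilbert} (T : H1 -> H2) : Prop :=
  (forall x y, T (vadd x y) = vadd (T x) (T y)) /\
  (forall a x, T (vscal a x) = vscal a (T x)).

Definition bounded_linear {H1 H2 : Hilbert} (T : H1 -> H2) : Prop :=
  linear_op T /\ exists C, forall x, hnorm (T x) <= C * hnorm x.

Definition opnorm_is {H1 H2 : Hilbert} (T : H1 -> H2) (n : R) : Prop :=
  is_lub (fun r => exists x, hnorm x <= 1 /\ r = hnorm (T x)) n.

Definition is_adjoint {H1 H2 : Hilbert} (T : H1 -> H2) (Ts : H2 -> H1) : Prop :=
  forall x y, inner (T x) y = inner x (Ts y).

Definition Mnorm2 {H : Hilbert} (M : H -> H) (x : H) : R := inner x (M x).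

Definition in_Splus {H : Hilbert} (M : H -> H) : Prop :=
  bounded_linear M /\ (forall x y, inner (M x) y = inner x (M y)) /\
  (forall x, 0 <= Mnorm2 M x).

Definition loewner_ge {H : Hilbert} (M1 M2 : H -> H) : Prop :=
  forall x, Mnorm2 M1 x >= Mnorm2 M2 x.

Definition in_Palpha {H : Hilbert} (alpha : R) (M : H -> H) : Prop :=
  in_Splus M /\ loewner_ge M (vscal alpha).

Definition op_minus_id {H : Hilbert} (M : H -> H) (c : R) : H -> H :=
  fun x => vsub (M x) (vscal c x).

Definition Lagr {H G K : Hilbert} (f : H -> ER) (h1 : H -> R) (g : G -> ER) (h2 : G -> R)
  (A : H -> K) (B : G -> K) (b : K) (x : H) (z : G) (p : K) : ER :=
  ERaddR (ERadd (ERaddR (f x) (h1 x)) (ERaddR (g z) (h2 z)))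
         (inner p (vsub (vsub b (A x)) (B z))).

Definition saddle_point {H G K : Hilbert} (f : H -> ER) (h1 : H -> R) (g : G -> ER)
  (h2 : G -> R) (A : H -> K) (B : G -> K) (b : K) (xs : H) (zs : G) (ps : K) : Prop :=
  forall x z p,
    ERle (Lagr f h1 g h2 A B b xs zs p) (Lagr f h1 g h2 A B b xs zs ps) /\
    ERle (Lagr f h1 g h2 A B b xs zs ps) (Lagr f h1 g h2 A B b x z ps).

Definition weak_cv {H : Hilbert} (u : nat -> H) (l : H) : Prop :=
  forall w : H, Un_cv (fun n => inner (u n) w) (inner l w).

Definition prox_AMA {H G K : Hilbert} (f : H -> ER) (g : G -> ER)
  (gh1 : H -> H) (gh2 : G -> G) (A : H -> K) (B : G -> K) (b : K)
  (M1 : nat -> H -> H) (M2 : nat -> G -> G) (c : nat -> R)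
  (x : nat -> H) (z : nat -> G) (p : nat -> K) : Prop :=
  forall k : nat,
    (forall u : H,
      ERle (ERaddR (f (x (S k)))
              (- inner (p k) (A (x (S k))) + inner (vsub (x (S k)) (x k)) (gh1 (x k))
               + / 2 * Mnorm2 (M1 k) (vsub (x (S k)) (x k))))
           (ERaddR (f u)
              (- inner (p k) (A u) + inner (vsub u (x k)) (gh1 (x k))
               + / 2 * Mnorm2 (M1 k) (vsub u (x k))))) /\
    (forall v : G,
      ERle (ERaddR (g (z (S k)))
              (- inner (p k) (B (z (S k)))
               + c k / 2 * (hnorm (vsub (vadd (A (x (S k))) (B (z (S k)))) b)) ^ 2
               + inner (vsub (z (S k)) (z k)) (gh2 (z k))
               + / 2 * Mnorm2 (M2 k) (vsub (z (S k)) (z k))))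
           (ERaddR (g v)
              (- inner (p k) (B v)
               + c k / 2 * (hnorm (vsub (vadd (A (x (S k))) (B v)) b)) ^ 2
               + inner (vsub v (z k)) (gh2 (z k))
               + / 2 * Mnorm2 (M2 k) (vsub v (z k))))) /\
    p (S k) = vadd (p k) (vscal (c k) (vsub (vsub b (A (x (S k)))) (B (z (S k))))).

From Stdlib Require Import Reals Lra Psatz ClassicalEpsilon Classical Arith.
Open Scope R_scope.

(** For a saddle point (xs, zs, ps) the quantity
    V_k = |p^k - ps|^2 + c_k |x^k - xs|^2_{M1^k} + c_k |z^k - zs|^2_{M2^k}
    decreases, and the decrease dominates |x^{k+1} - xs|^2 and the squared residual
    |b - A x^{k+1} - B z^{k+1}|^2: the strong convexity of f pays for the coupling term
    through A, which is where the step-size bound c_k <= 2 gamma / |A|^2 - eps enters,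
    and the Baillon-Haddad inequality absorbs the gradient steps into M_i^k - L_i/2 Id.
    Hence x^k -> xs strongly, the residual vanishes and (z^k, p^k) is bounded (here (i)
    or (ii) is needed).  Passing to the limit in the optimality conditions of the two
    subproblems (through lower semicontinuity, via Mazur's lemma) shows that every weak
    cluster point of (z^k, p^k) yields a saddle point together with xs.  Finally, an
    Opial-type argument comparing the limits of V_k for two cluster points shows that the
    weak cluster point is unique, so the whole sequence converges weakly. *)

Arguments vadd_assoc {_} _ _ _.
Arguments vadd_comm {_} _ _.
Arguments vadd_0l {_} _.
Arguments vadd_oppl {_} _.
Arguments vscal_assoc {_} _ _ _.
Arguments vscal_1 {_} _.
Arguments vscal_distr_v {_} _ _ _.
Arguments vscal_distr_s {_} _ _ _.
Arguments inner_sym {_} _ _.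
Arguments inner_add_l {_} _ _ _.
Arguments inner_scal_l {_} _ _ _.
Arguments inner_pos {_} _.
Arguments inner_def {_} _ _.

(** * Inner-product algebra *)

Section InnerAlgebra.
Context {H : Hilbert}.
Implicit Types x y z u v w : H.

Lemma vadd_0r x : vadd x vzero = x.
Proof. rewrite vadd_comm; apply vadd_0l. Qed.

Lemma vadd_cancel_l a x y : vadd a x = vadd a y -> x = y.
Proof.
  intro E. rewrite <- (vadd_0l x), <- (vadd_0l y), <- (vadd_oppl a).
  rewrite <- !vadd_assoc, E; reflexivity.
Qed.

Lemma vscal_0_l x : vscal 0 x = vzero.
Proof.
  apply (vadd_cancel_l (vscal 0 x)). rewrite <- vscal_distr_s, vadd_0r.
  f_equal; ring.
Qed.

Lemma inner_0_l y : inner (@vzero H) y = 0.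
Proof. rewrite <- (vscal_0_l vzero), inner_scal_l; ring. Qed.

Lemma inner_opp_l x y : inner (vopp x) y = - inner x y.
Proof.
  assert (E : inner (vadd (vopp x) x) y = 0) by (rewrite vadd_oppl; apply inner_0_l).
  rewrite inner_add_l in E; lra.
Qed.

Lemma inner_sub_l x y w : inner (vsub x y) w = inner x w - inner y w.
Proof. unfold vsub; rewrite inner_add_l, inner_opp_l; ring. Qed.
Lemma inner_add_r x y z : inner x (vadd y z) = inner x y + inner x z.
Proof. rewrite !(inner_sym x); apply inner_add_l. Qed.
Lemma inner_scal_r a x y : inner x (vscal a y) = a * inner x y.
Proof. rewrite !(inner_sym x); apply inner_scal_l. Qed.
Lemma inner_opp_r x y : inner x (vopp y) = - inner x y.
Proof. rewrite !(inner_sym x); apply inner_opp_l. Qed.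
Lemma inner_sub_r x y w : inner w (vsub x y) = inner w x - inner w y.
Proof. rewrite !(inner_sym w); apply inner_sub_l. Qed.
Lemma inner_0_r y : inner y (@vzero H) = 0.
Proof. rewrite inner_sym; apply inner_0_l. Qed.

Lemma vsub_diag x : vsub x x = vzero.
Proof. unfold vsub; rewrite vadd_comm; apply vadd_oppl. Qed.

Lemma inner_ext u v : (forall w, inner u w = inner v w) -> u = v.
Proof.
  intro E. assert (Z : vsub u v = vzero).
  { apply inner_def. rewrite inner_sub_l, (E (vsub u v)); ring. }
  rewrite <- (vadd_0l v), <- Z. unfold vsub.
  rewrite <- vadd_assoc, vadd_oppl, vadd_0r; reflexivity.
Qed.

End InnerAlgebra.

Hint Rewrite @inner_add_l @inner_scal_l @inner_opp_l @inner_sub_l @inner_0_l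
  @inner_add_r @inner_scal_r @inner_opp_r @inner_sub_r @inner_0_r : inE.

(* Vector identities are proved by testing against an arbitrary vector. *)
Ltac vexp := apply inner_ext; intro; autorewrite with inE.
Ltac vext := vexp; ring.

Section Norms.
Context {H : Hilbert}.
Implicit Types x y z u v w : H.

Lemma vsub_eq0 x y : vsub x y = vzero -> x = y.
Proof.
  intro E. apply inner_ext. intro w.
  assert (inner (vsub x y) w = 0) by (rewrite E; apply inner_0_l).
  autorewrite with inE in *. lra.
Qed.

Lemma hnorm_pow2 x : hnorm x ^ 2 = inner x x.
Proof. unfold hnorm; apply pow2_sqrt, inner_pos. Qed.
Lemma hnorm_pos x : 0 <= hnorm x.
Proof. apply sqrt_pos. Qed.
Lemma hnorm_mul_self x : hnorm x * hnorm x = inner x x.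
Proof. unfold hnorm; apply sqrt_sqrt, inner_pos. Qed.

Lemma quadratic_nonneg_discr a b c :
  (forall t, 0 <= a + 2 * b * t + c * t ^ 2) -> b ^ 2 <= a * c.
Proof.
  intro Q. assert (Ha : 0 <= a) by (specialize (Q 0); lra).
  destruct (Req_dec c 0) as [Hc|Hc].
  - subst c. destruct (Req_dec b 0) as [Hb|Hb]; [rewrite Hb; lra|].
    specialize (Q (- (a + 1) / (2 * b))).
    assert (2 * b * (- (a + 1) / (2 * b)) = - (a + 1)) by (field; auto). lra.
  - assert (Hc' : 0 < c).
    { destruct (Rle_lt_dec c 0) as [Hle|]; [|lra].
      (* for c < 0 the quadratic is negative at a large enough t >= 1 *)
      set (T := (a + 2 * Rabs b + 1) / (- c) + 1).
      pose proof (Rabs_pos b).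
      assert (HT1 : (a + 2 * Rabs b + 1) / (- c) >= 0).
      { apply Rle_ge, Rmult_le_pos; [lra|]. left; apply Rinv_0_lt_compat; lra. }
      assert (HT2 : c * T <= - (a + 2 * Rabs b + 1)).
      { unfold T. rewrite Rmult_plus_distr_l. unfold Rdiv.
        replace (c * ((a + 2 * Rabs b + 1) * / - c)) with (- (a + 2 * Rabs b + 1))
          by (field; lra). lra. }
      assert (T >= 1) by (unfold T; lra).
      specialize (Q T). pose proof (Rle_abs b).
      assert (2 * b * T <= 2 * Rabs b * T) by (apply Rmult_le_compat_r; lra).
      assert ((c * T) * T <= - (a + 2 * Rabs b + 1) * T) by (apply Rmult_le_compat_r; lra).
      assert (0 <= (a + 1) * (T - 1)) by (apply Rmult_le_pos; lra). nra. }
    specialize (Q (- b / c)). field_simplify in Q; [|lra].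
    apply Rmult_le_compat_r with (r := c) in Q; [|lra].
    unfold Rdiv in Q. rewrite Rmult_0_l, Rmult_assoc, Rinv_l in Q; lra.
Qed.

Lemma cauchy_schwarz_sq x y : inner x y ^ 2 <= inner x x * inner y y.
Proof.
  apply quadratic_nonneg_discr. intro t. pose proof (inner_pos (vadd x (vscal t y))) as P.
  autorewrite with inE in P. rewrite (inner_sym y x) in P. nra.
Qed.

Lemma cauchy_schwarz x y : Rabs (inner x y) <= hnorm x * hnorm y.
Proof.
  apply Rsqr_incr_0_var.
  - rewrite <- Rsqr_abs, Rsqr_mult. unfold Rsqr. rewrite !hnorm_mul_self.
    pose proof (cauchy_schwarz_sq x y). simpl in *. lra.
  - pose proof (hnorm_pos x); pose proof (hnorm_pos y); nra.
Qed.

Lemma inner_le_hnorm_mul x y : inner x y <= hnorm x * hnorm y.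
Proof. pose proof (cauchy_schwarz x y). pose proof (Rle_abs (inner x y)). lra. Qed.

Lemma hnorm_0 : hnorm (@vzero H) = 0.
Proof. unfold hnorm. rewrite inner_0_l. apply sqrt_0. Qed.

Lemma hnorm_scal a x : hnorm (vscal a x) = Rabs a * hnorm x.
Proof.
  unfold hnorm. autorewrite with inE. rewrite <- Rmult_assoc, sqrt_mult.
  - rewrite <- Rsqr_def, sqrt_Rsqr_abs; auto.
  - apply Rle_0_sqr.
  - apply inner_pos.
Qed.

Lemma hnorm_opp x : hnorm (vopp x) = hnorm x.
Proof. unfold hnorm. autorewrite with inE. f_equal; ring. Qed.

Lemma hnorm_triangle x y : hnorm (vadd x y) <= hnorm x + hnorm y.
Proof.
  apply Rsqr_incr_0_var; [|pose proof (hnorm_pos x); pose proof (hnorm_pos y); lra].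
  unfold Rsqr. rewrite hnorm_mul_self. autorewrite with inE.
  rewrite (inner_sym y x). pose proof (inner_le_hnorm_mul x y).
  replace ((hnorm x + hnorm y) * (hnorm x + hnorm y)) with
    (hnorm x * hnorm x + hnorm y * hnorm y + 2 * (hnorm x * hnorm y)) by ring.
  rewrite !hnorm_mul_self. lra.
Qed.

Lemma hnorm_sub_sym x y : hnorm (vsub x y) = hnorm (vsub y x).
Proof. unfold hnorm. autorewrite with inE. f_equal. rewrite (inner_sym x y). ring. Qed.

Lemma hnorm_sub_triangle x y z : hnorm (vsub x z) <= hnorm (vsub x y) + hnorm (vsub y z).
Proof.
  replace (vsub x z) with (vadd (vsub x y) (vsub y z)) by vext.
  apply hnorm_triangle.
Qed.

Lemma hnorm_sub_le x y : hnorm (vsub x y) <= hnorm x + hnorm y.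
Proof. unfold vsub. rewrite <- (hnorm_opp y). apply hnorm_triangle. Qed.

Lemma hnorm_le_sub_add x y : hnorm x <= hnorm (vsub x y) + hnorm y.
Proof.
  replace x with (vadd (vsub x y) y) at 1 by vext. apply hnorm_triangle.
Qed.

Lemma hnorm_eq0 x : hnorm x = 0 -> x = vzero.
Proof. intro E. apply inner_def. rewrite <- hnorm_mul_self, E; ring. Qed.

Lemma inner_vsub_expand (a b : H) : inner (vsub a b) (vsub a b) = inner a a - 2 * inner a b + inner b b.
Proof. autorewrite with inE. rewrite (inner_sym b a). ring. Qed.

Lemma young_inner x y e :
  0 < e -> Rabs (inner x y) <= e / 2 * inner x x + / (2 * e) * inner y y.
Proof.
  intro He. pose proof (cauchy_schwarz x y). rewrite <- !hnorm_mul_self.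
  pose proof (hnorm_pos x). pose proof (hnorm_pos y).
  assert (E : e / 2 * (hnorm x * hnorm x) + / (2 * e) * (hnorm y * hnorm y) - hnorm x * hnorm y
            = / (2 * e) * (e * hnorm x - hnorm y) ^ 2) by (field; lra).
  assert (0 <= / (2 * e) * (e * hnorm x - hnorm y) ^ 2).
  { apply Rmult_le_pos; [left; apply Rinv_0_lt_compat; lra | apply pow2_ge_0]. }
  lra.
Qed.

End Norms.

(** * Real numbers and real sequences *)

Lemma Rabs_le_between x a : Rabs x <= a -> - a <= x <= a.
Proof.
  intro E. pose proof (Rle_abs x). pose proof (Rle_abs (- x)) as N.
  rewrite Rabs_Ropp in N. lra.
Qed.

Lemma le_epsilon a b : (forall e, 0 < e -> a <= b + e) -> a <= b.
Proof.
  intro E. destruct (Rle_lt_dec a b) as [|Hlt]; auto.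
  specialize (E ((a - b) / 2)). lra.
Qed.

Lemma le_epsilon_scaled a b c : 0 <= c -> (forall e, 0 < e -> a <= b + e * c) -> a <= b.
Proof.
  intros Hc E. apply le_epsilon. intros e He.
  assert (Hq : 0 < e / (c + 1)) by (apply Rdiv_lt_0_compat; lra).
  assert (e / (c + 1) * c <= e).
  { apply Rle_trans with (e / (c + 1) * (c + 1)); [apply Rmult_le_compat_l; lra|].
    right; field; lra. }
  specialize (E _ Hq). lra.
Qed.

Lemma Un_cv_ext u v l : (forall n, u n = v n) -> Un_cv u l -> Un_cv v l.
Proof.
  intros E Hu e He. destruct (Hu e He) as [N HN]. exists N. intros n Hn. rewrite <- E. auto.
Qed.

Lemma Un_cv_const a : Un_cv (fun _ => a) a.
Proof. intros e He. exists 0%nat. intros. unfold Rdist. rewrite Rminus_diag, Rabs_R0. lra. Qed.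

Lemma Un_cv_scal0 a u : Un_cv u 0 -> Un_cv (fun n => a * u n) 0.
Proof. intro Hu. replace 0 with (a * 0) by ring. apply CV_mult; [apply Un_cv_const | exact Hu]. Qed.

Lemma Un_cv_unshift u l : Un_cv (fun n => u (S n)) l -> Un_cv u l.
Proof.
  intros Hu e He. destruct (Hu e He) as [N HN]. exists (S N). intros n Hn.
  destruct n; [lia|]. apply HN. lia.
Qed.

Lemma Un_cv_squeeze0 u v : (forall n, Rabs (u n) <= v n) -> Un_cv v 0 -> Un_cv u 0.
Proof.
  intros Hb Hv e He. destruct (Hv e He) as [N HN]. exists N. intros n Hn.
  specialize (HN n Hn). specialize (Hb n). unfold Rdist in *.
  rewrite Rminus_0_r in *. pose proof (Rle_abs (v n)). lra.
Qed.

Lemma Un_cv_sub_limit u l : Un_cv u l -> Un_cv (fun n => u n - l) 0.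
Proof.
  intros Hu e He. destruct (Hu e He) as [N HN]. exists N. intros n Hn.
  specialize (HN n Hn). unfold Rdist in *. rewrite Rminus_0_r. auto.
Qed.

Lemma Un_cv_of_sub_limit u l : Un_cv (fun n => u n - l) 0 -> Un_cv u l.
Proof.
  intros Hu e He. destruct (Hu e He) as [N HN]. exists N. intros n Hn.
  specialize (HN n Hn). unfold Rdist in *. rewrite Rminus_0_r in HN. auto.
Qed.

Lemma Un_cv_bounded u l : Un_cv u l -> exists K, forall n, Rabs (u n) <= K.
Proof.
  intro Hu. destruct (Hu 1 ltac:(lra)) as [N HN].
  assert (Hinit : forall m, exists K, forall n, (n <= m)%nat -> Rabs (u n) <= K).
  { induction m as [|m [K HK]].
    - exists (Rabs (u 0%nat)). intros n Hn. replace n with 0%nat by lia. lra.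
    - exists (Rmax K (Rabs (u (S m)))). intros n Hn.
      destruct (Nat.eq_dec n (S m)) as [->|]; [apply Rmax_r|].
      eapply Rle_trans; [apply HK; lia | apply Rmax_l]. }
  destruct (Hinit N) as [K HK]. exists (Rmax K (Rabs l + 1)). intros n.
  destruct (le_lt_dec n N).
  - eapply Rle_trans; [apply HK; auto | apply Rmax_l].
  - specialize (HN n ltac:(lia)). unfold Rdist in HN.
    eapply Rle_trans; [|apply Rmax_r].
    pose proof (Rabs_triang (u n - l) l). replace (u n - l + l) with (u n) in * by ring. lra.
Qed.

Lemma Un_cv_bounded_mul0 u v K :
  (forall n, Rabs (u n) <= K) -> Un_cv v 0 -> Un_cv (fun n => u n * v n) 0.
Proof.
  intros Hu Hv. apply (Un_cv_squeeze0 _ (fun n => K * Rabs (v n))).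
  - intro n. rewrite Rabs_mult. apply Rmult_le_compat_r; [apply Rabs_pos | auto].
  - apply Un_cv_scal0. replace 0 with (Rabs 0) by apply Rabs_R0. apply cv_cvabs; auto.
Qed.

Lemma Un_cv_le_eventually u l a N0 : Un_cv u l -> (forall n, (N0 <= n)%nat -> u n <= a) -> l <= a.
Proof.
  intros Hu Ha. destruct (Rle_lt_dec l a) as [|Hlt]; auto. exfalso.
  destruct (Hu (l - a) ltac:(lra)) as [N HN]. specialize (HN (max N N0) ltac:(lia)).
  specialize (Ha (max N N0) ltac:(lia)). unfold Rdist in HN.
  pose proof (Rle_abs (- (u (max N N0) - l))). rewrite Rabs_Ropp in *. lra.
Qed.

Lemma Un_cv_ge_eventually u l a N0 : Un_cv u l -> (forall n, (N0 <= n)%nat -> a <= u n) -> a <= l.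
Proof.
  intros Hu Ha. destruct (Rle_lt_dec a l) as [|Hlt]; auto. exfalso.
  destruct (Hu (a - l) ltac:(lra)) as [N HN]. specialize (HN (max N N0) ltac:(lia)).
  specialize (Ha (max N N0) ltac:(lia)). unfold Rdist in HN.
  pose proof (Rle_abs (u (max N N0) - l)). lra.
Qed.

Lemma Un_cv_sqrt0 u : (forall n, 0 <= u n) -> Un_cv u 0 -> Un_cv (fun n => sqrt (u n)) 0.
Proof.
  intros Hp Hu e He. destruct (Hu (e * e) ltac:(nra)) as [N HN]. exists N. intros n Hn.
  specialize (HN n Hn). unfold Rdist in *. rewrite Rminus_0_r in *.
  rewrite (Rabs_pos_eq (u n)) in HN by auto.
  rewrite (Rabs_pos_eq (sqrt (u n))) by apply sqrt_pos.
  rewrite <- (sqrt_Rsqr e) by lra. apply sqrt_lt_1_alt. split; [auto | unfold Rsqr; lra].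
Qed.

Lemma Un_cv_cauchy u l : Un_cv u l -> Cauchy_crit u.
Proof.
  intros Hu e He. destruct (Hu (e / 2) ltac:(lra)) as [N HN]. exists N. intros n m Hn Hm.
  pose proof (HN m Hm) as Hm'. specialize (HN n Hn). unfold Rdist in *.
  pose proof (Rabs_triang (u n - l) (l - u m)).
  replace (u n - l + (l - u m)) with (u n - u m) in * by ring.
  rewrite <- Rabs_Ropp in Hm'. replace (- (u m - l)) with (l - u m) in Hm' by ring. lra.
Qed.

Lemma Un_cv_antitone_bounded_below u :
  (forall k, u (S k) <= u k) -> (forall k, 0 <= u k) -> exists l, Un_cv u l.
Proof.
  intros Hd Hp. destruct (decreasing_cv u Hd) as [l Hl]; eauto.
  exists 0. intros r [n Hn]. unfold opp_seq in Hn. specialize (Hp n). lra.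
Qed.

Lemma Un_cv_telescoping_decrease (V D : nat -> R) :
  (forall k, 0 <= V k) -> (forall k, 0 <= D k) ->
  (forall k, V (S k) + D k <= V k) -> (exists l, Un_cv V l) /\ Un_cv D 0.
Proof.
  intros HV HD Hs.
  destruct (Un_cv_antitone_bounded_below V) as [l Hl]; auto.
  { intro k. specialize (Hs k). specialize (HD k). lra. }
  split; eauto.
  apply (Un_cv_squeeze0 D (fun k => V k - V (S k))).
  - intro n. rewrite Rabs_pos_eq by auto. specialize (Hs n). lra.
  - replace 0 with (l - l) by ring. apply CV_minus; auto.
    intros e He. destruct (Hl e He) as [N HN]. exists N. intros n Hn. apply HN. lia.
Qed.

Lemma Un_cv_not_frequent u l : ~ Un_cv u l ->
  exists e, 0 < e /\ forall N, exists n, (N <= n)%nat /\ e <= Rabs (u n - l).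
Proof.
  intro Hn. apply NNPP. intro Hcc. apply Hn. intros e He. apply NNPP. intro Hne. apply Hcc.
  exists e. split; auto. intro N. apply NNPP. intro Hx. apply Hne. exists N. intros n Hnn.
  unfold Rdist. destruct (Rlt_le_dec (Rabs (u n - l)) e); auto.
  exfalso. apply Hx. exists n. split; auto.
Qed.

Definition strict_incr (s : nat -> nat) := forall n, (s n < s (S n))%nat.

Lemma strict_incr_lt s : strict_incr s -> forall m n, (m < n)%nat -> (s m < s n)%nat.
Proof. intros Hs m n Hmn. induction Hmn; [apply Hs|]. specialize (Hs m0). lia. Qed.

Lemma strict_incr_ge s : strict_incr s -> forall n, (n <= s n)%nat.
Proof. intros Hs n. induction n; [lia|]. specialize (Hs n). lia. Qed.

Lemma strict_incr_comp s t : strict_incr s -> strict_incr t -> strict_incr (fun n => s (t n)).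
Proof. intros Hs Ht n. apply strict_incr_lt; auto. Qed.

Lemma strict_incr_id : strict_incr (fun n => n).
Proof. intro; lia. Qed.

Lemma Un_cv_subseq u l s : strict_incr s -> Un_cv u l -> Un_cv (fun n => u (s n)) l.
Proof.
  intros Hs Hu e He. destruct (Hu e He) as [N HN]. exists N. intros n Hn.
  apply HN. pose proof (strict_incr_ge s Hs n). lia.
Qed.

Lemma Un_cv_shift u l : Un_cv u l -> Un_cv (fun n => u (S n)) l.
Proof. apply (Un_cv_subseq u l S). intro; lia. Qed.

Lemma frequent_subseq (P : nat -> nat -> Prop) :
  (forall k N, exists n, (N <= n)%nat /\ P k n) -> exists s, strict_incr s /\ forall k, P k (s k).
Proof.
  intro HP.
  destruct (choice (fun kN n => (snd kN <= n)%nat /\ P (fst kN) n)) as [F HF].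
  { intros [k N]. apply HP. }
  set (s := fix s n := match n with O => F (O, O) | S m => F (S m, S (s m)) end).
  exists s. split.
  - intro n. destruct (HF (S n, S (s n))) as [Hle _]. simpl in Hle |- *. lia.
  - intros [|k]; apply (HF (_, _)).
Qed.

Lemma bolzano_weierstrass_subseq u K :
  (forall n, Rabs (u n) <= K) -> exists s, strict_incr s /\ exists l, Un_cv (fun n => u (s n)) l.
Proof.
  intro Hb.
  destruct (Bolzano_Weierstrass u (fun c => - K <= c <= K) (compact_P3 (- K) K)) as [l Hl].
  { intro n. apply Rabs_le_between, Hb. }
  assert (Hf : forall k N, exists n, (N <= n)%nat /\ Rabs (u n - l) < / INR (S k)).
  { intros k N. assert (Hpos : 0 < / INR (S k)) by (apply Rinv_0_lt_compat, lt_0_INR; lia).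
    destruct (Hl (fun c => Rabs (c - l) < / INR (S k)) N) as [n [Hn Hv]]; eauto.
    exists (mkposreal _ Hpos). intros y Hy. exact Hy. }
  destruct (frequent_subseq _ Hf) as [s [Hs Hs2]]. exists s. split; auto. exists l.
  intros e He. destruct (archimed_cor1 e He) as [N [HN HN0]]. exists N. intros n Hn.
  eapply Rlt_trans; [apply Hs2|]. eapply Rle_lt_trans; [|apply HN].
  apply Rinv_le_contravar; [apply lt_0_INR; lia | apply le_INR; lia].
Qed.

(* A subsequence along which the bounded sequence converges (identity if none exists),
   chosen so that it can be iterated in the diagonal argument below. *)
Definition convergent_subseq (u : nat -> R) : nat -> nat :=
  match excluded_middle_informative
          (exists s, strict_incr s /\ exists l, Un_cv (fun n => u (s n)) l) with
  | left e => proj1_sig (constructive_indefinite_description _ e)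
  | right _ => fun n => n
  end.

Lemma convergent_subseq_incr u : strict_incr (convergent_subseq u).
Proof.
  unfold convergent_subseq. destruct excluded_middle_informative as [e|e]; [|apply strict_incr_id].
  destruct (constructive_indefinite_description _ e) as [s [Hs Hcv]]; simpl; auto.
Qed.

Lemma convergent_subseq_cv u K :
  (forall n, Rabs (u n) <= K) -> exists l, Un_cv (fun n => u (convergent_subseq u n)) l.
Proof.
  intro Hb. unfold convergent_subseq. destruct excluded_middle_informative as [e|e].
  - destruct (constructive_indefinite_description _ e) as [s [Hs Hcv]]; simpl; auto.
  - exfalso. apply e. eapply bolzano_weierstrass_subseq; eauto.
Qed.

Lemma diagonal_subseq (a : nat -> nat -> R) :
  (forall m, exists K, forall n, Rabs (a m n) <= K) ->
  exists d, strict_incr d /\ forall m, exists l, Un_cv (fun j => a m (d j)) l.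
Proof.
  intro Hb.
  set (T := fix T m : nat -> nat := match m with
      | O => convergent_subseq (a O)
      | S m' => fun n => T m' (convergent_subseq (fun j => a (S m') (T m' j)) n) end).
  assert (HT : forall m, strict_incr (T m)).
  { induction m; simpl; [apply convergent_subseq_incr|].
    apply strict_incr_comp; auto. apply convergent_subseq_incr. }
  assert (HTc : forall m, exists l, Un_cv (fun j => a m (T m j)) l).
  { destruct m as [|m]; simpl.
    - destruct (Hb O) as [K HK]. eapply convergent_subseq_cv; eauto.
    - destruct (Hb (S m)) as [K HK]. apply (convergent_subseq_cv (fun j => a (S m) (T m j)) K). auto. }
  assert (HTs : forall m j, (m <= j)%nat -> forall n, exists r, (n <= r)%nat /\ T j n = T m r).
  { intros m j Hmj. induction Hmj as [|j Hmj IH]; intro n; [exists n; split; auto|].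
    simpl. set (rho := convergent_subseq (fun j0 => a (S j) (T j j0))).
    destruct (IH (rho n)) as [r [Hr Er]]. exists r. split; auto.
    pose proof (strict_incr_ge rho (convergent_subseq_incr _) n). lia. }
  exists (fun j => T j j). split.
  - intro j. simpl. set (rho := convergent_subseq (fun j0 => a (S j) (T j j0))).
    apply strict_incr_lt; auto. pose proof (strict_incr_ge rho (convergent_subseq_incr _) (S j)). lia.
  - intro m. destruct (HTc m) as [l Hl]. exists l. intros e He. destruct (Hl e He) as [N HN].
    exists (max m N). intros j Hj. destruct (HTs m j ltac:(lia) j) as [r [Hr Er]].
    rewrite Er. apply HN. lia.
Qed.

(** * Differentiable convex functions with Lipschitz gradient *)

Lemma vsegment_eq {H : Hilbert} (x y : H) t :
  vadd (vscal t y) (vscal (1 - t) x) = vadd x (vscal t (vsub y x)).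
Proof. vext. Qed.

Lemma small_step {H : Hilbert} (d : H) delta tau : 0 < delta -> 0 < tau ->
  exists t, 0 < t /\ t <= 1 /\ t <= tau /\ hnorm (vscal t d) < delta.
Proof.
  intros Hd Ht. set (t := Rmin (Rmin 1 tau) (delta / (2 * (hnorm d + 1)))).
  pose proof (hnorm_pos d).
  assert (0 < delta / (2 * (hnorm d + 1))) by (apply Rdiv_lt_0_compat; lra).
  assert (t <= Rmin 1 tau) by apply Rmin_l.
  pose proof (Rmin_l 1 tau). pose proof (Rmin_r 1 tau).
  assert (Htd : t <= delta / (2 * (hnorm d + 1))) by apply Rmin_r.
  assert (0 < t) by (unfold t; repeat apply Rmin_glb_lt; lra).
  exists t. repeat split; try lra.
  rewrite hnorm_scal, Rabs_right by lra.
  apply Rle_lt_trans with (delta / (2 * (hnorm d + 1)) * (hnorm d + 1)).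
  - apply Rmult_le_compat; lra.
  - replace (delta / (2 * (hnorm d + 1)) * (hnorm d + 1)) with (delta / 2) by (field; lra). lra.
Qed.

Section SmoothConvex.
Context {H : Hilbert}.
Variables (h : H -> R) (gh : H -> H).
Hypothesis Hgrad : frechet_gradient h gh.

Lemma frechet_continuous x e : 0 < e -> exists delta, 0 < delta /\
  forall y, hnorm (vsub y x) < delta -> Rabs (h y - h x) < e.
Proof.
  intros He. destruct (Hgrad x 1 ltac:(lra)) as [d1 [Hd1 Hf]].
  set (K := hnorm (gh x) + 1). pose proof (hnorm_pos (gh x)).
  assert (HK : 0 < K) by (unfold K; lra).
  exists (Rmin d1 (e / (2 * K))). split; [apply Rmin_glb_lt; auto; apply Rdiv_lt_0_compat; lra|].
  intros y Hy. specialize (Hf (vsub y x)).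
  replace (vadd x (vsub y x)) with y in Hf by vext.
  pose proof (Rmin_l d1 (e / (2 * K))). pose proof (Rmin_r d1 (e / (2 * K))).
  specialize (Hf ltac:(lra)). pose proof (cauchy_schwarz (gh x) (vsub y x)) as C.
  pose proof (hnorm_pos (vsub y x)).
  assert (hnorm (vsub y x) * K < e / 2).
  { apply Rlt_le_trans with (e / (2 * K) * K); [apply Rmult_lt_compat_r; lra|].
    right; field; lra. }
  unfold K in *. apply Rabs_le_between in Hf. apply Rabs_le_between in C.
  apply Rabs_def1; nra.
Qed.

Hypothesis Hconv : convex_real h.

Lemma convex_gradient_ineq x y : h y >= h x + inner (gh x) (vsub y x).
Proof.
  apply Rle_ge. set (d := vsub y x).
  apply (le_epsilon_scaled _ _ (hnorm d) (hnorm_pos d)). intros e He.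
  destruct (Hgrad x e He) as [delta [Hdel Hf]].
  destruct (small_step d delta 1 Hdel ltac:(lra)) as [t [Ht0 [Ht1 [_ Htd]]]].
  specialize (Hf _ Htd).
  pose proof (Hconv y x t (h y) (h x) ltac:(lra) (Rle_refl _) (Rle_refl _)) as Hc.
  simpl in Hc. rewrite vsegment_eq in Hc. fold d in Hc.
  rewrite inner_scal_r, hnorm_scal, (Rabs_right t) in Hf by lra.
  apply Rabs_le_between in Hf.
  assert (t * (h x + inner (gh x) d) <= t * (h y + e * hnorm d)) by lra.
  apply Rmult_le_reg_l in H0; lra.
Qed.

Variable L : R.
Hypothesis HL : 0 <= L.
Hypothesis Hlip : lipschitz L gh.

Lemma gradient_inner_shift x t d : 0 <= t ->
  inner (gh (vadd x (vscal t d))) d <= inner (gh x) d + L * t * inner d d.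
Proof.
  intro Ht. set (y := vadd x (vscal t d)).
  pose proof (inner_le_hnorm_mul (vsub (gh y) (gh x)) d) as C. rewrite inner_sub_l in C.
  assert (Hl : hnorm (vsub (gh y) (gh x)) <= L * (t * hnorm d)).
  { eapply Rle_trans; [apply Hlip|]. replace (vsub y x) with (vscal t d) by (unfold y; vext).
    rewrite hnorm_scal, Rabs_pos_eq by lra. lra. }
  pose proof (hnorm_pos d).
  assert (hnorm (vsub (gh y) (gh x)) * hnorm d <= L * (t * hnorm d) * hnorm d)
    by (apply Rmult_le_compat_r; auto).
  rewrite <- hnorm_mul_self. lra.
Qed.

(* The descent lemma with the constant (n + 1) / (2 n) instead of 1/2: walk from x to y in
   n equal steps, bounding each by the gradient inequality and the Lipschitz estimate. *)
Lemma descent_lemma_steps x y n : (1 <= n)%nat ->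
  h y <= h x + inner (gh x) (vsub y x)
         + L * inner (vsub y x) (vsub y x) * (INR n + 1) / (2 * INR n).
Proof.
  intros Hn. set (d := vsub y x). set (N := INR n).
  assert (HN : 1 <= N) by (unfold N; apply (le_INR 1%nat); auto).
  set (xm := fun m : nat => vadd x (vscal (INR m / N) d)).
  assert (Hind : forall m, h (xm m) - h x <= INR m / N * inner (gh x) d
            + L * inner d d * (INR m * (INR m + 1)) / (2 * N * N)).
  { induction m as [|m IH].
    - unfold xm. simpl. replace (vadd x (vscal (0 / N) d)) with x by (vexp; unfold Rdiv; ring).
      unfold Rdiv; lra.
    - pose proof (convex_gradient_ineq (xm (S m)) (xm m)) as G.
      replace (vsub (xm m) (xm (S m))) with (vscal (- / N) d) in G
        by (unfold xm; rewrite S_INR; vexp; field; lra).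
      rewrite inner_scal_r in G.
      assert (C2 : inner (gh (xm (S m))) d <= inner (gh x) d + L * (INR (S m) / N) * inner d d).
      { apply gradient_inner_shift.
        apply Rmult_le_pos; [apply pos_INR | left; apply Rinv_0_lt_compat; lra]. }
      rewrite S_INR in *.
      assert (0 < / N) by (apply Rinv_0_lt_compat; lra).
      assert (/ N * inner (gh (xm (S m))) d
              <= / N * (inner (gh x) d + L * ((INR m + 1) / N) * inner d d))
        by (apply Rmult_le_compat_l; lra).
      assert (E : (INR m + 1) / N * inner (gh x) d
                  + L * inner d d * ((INR m + 1) * (INR m + 1 + 1)) / (2 * N * N)
        = INR m / N * inner (gh x) d + L * inner d d * (INR m * (INR m + 1)) / (2 * N * N)
          + / N * (inner (gh x) d + L * ((INR m + 1) / N) * inner d d)) by (field; lra).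
      rewrite E. lra. }
  specialize (Hind n). unfold xm in Hind. fold N in Hind.
  replace (vadd x (vscal (N / N) d)) with y in Hind by (unfold d; vexp; field; lra).
  replace (N / N * inner (gh x) d + L * inner d d * (N * (N + 1)) / (2 * N * N))
    with (inner (gh x) d + L * inner d d * (N + 1) / (2 * N)) in Hind by (field; lra).
  lra.
Qed.

Lemma descent_lemma x y :
  h y <= h x + inner (gh x) (vsub y x) + L / 2 * inner (vsub y x) (vsub y x).
Proof.
  set (Q := L * inner (vsub y x) (vsub y x)).
  assert (HQ : 0 <= Q) by (unfold Q; apply Rmult_le_pos; auto; apply inner_pos).
  apply le_epsilon. intros e He.
  destruct (archimed_cor1 (e / (Q + 1))) as [n [Hn1 Hn0]]; [apply Rdiv_lt_0_compat; lra|].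
  pose proof (descent_lemma_steps x y n Hn0) as D. fold Q in D.
  assert (Hn : 0 < INR n) by (apply lt_0_INR; lia).
  replace (Q * (INR n + 1) / (2 * INR n)) with (Q / 2 + Q / (2 * INR n)) in D by (field; lra).
  assert (Q / (2 * INR n) <= e).
  { assert (/ INR n * (Q + 1) < e).
    { apply Rmult_lt_compat_r with (r := Q + 1) in Hn1; [|lra].
      replace (e / (Q + 1) * (Q + 1)) with e in Hn1 by (field; lra). lra. }
    assert (Q / (2 * INR n) <= / INR n * (Q + 1)).
    { unfold Rdiv. rewrite Rinv_mult.
      assert (0 < / INR n) by (apply Rinv_0_lt_compat; lra). nra. }
    lra. }
  unfold Q in *. lra.
Qed.

Lemma baillon_haddad_fun x y : 0 < L ->
  h y >= h x + inner (gh x) (vsub y x)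
         + / (2 * L) * inner (vsub (gh y) (gh x)) (vsub (gh y) (gh x)).
Proof.
  intro HL0. set (g := vsub (gh y) (gh x)).
  (* compare h at w = y - g / L from below (at x) and from above (at y) *)
  set (w := vsub y (vscal (/ L) g)).
  pose proof (convex_gradient_ineq x w) as G1. pose proof (descent_lemma y w) as D.
  replace (vsub w x) with (vsub (vsub y x) (vscal (/ L) g)) in G1 by (unfold w; vext).
  replace (vsub w y) with (vscal (- / L) g) in D by (unfold w; vext).
  assert (inner (gh y) g = inner (gh x) g + inner g g) by (unfold g; autorewrite with inE; ring).
  apply Rle_ge.
  replace (/ (2 * L) * inner g g) with (/ L * inner g g - L / 2 * (- / L * (- / L * inner g g)))
    by (field; lra).
  autorewrite with inE in *. nra.
Qed.

Lemma gradient_cocoercive x y : 0 < L ->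
  inner (vsub (gh x) (gh y)) (vsub x y) >= / L * inner (vsub (gh x) (gh y)) (vsub (gh x) (gh y)).
Proof.
  intro HL0. pose proof (baillon_haddad_fun x y HL0). pose proof (baillon_haddad_fun y x HL0).
  replace (vsub (gh x) (gh y)) with (vopp (vsub (gh y) (gh x))) in * by vext.
  replace (vsub x y) with (vopp (vsub y x)) by vext.
  autorewrite with inE in *.
  replace (/ L) with (/ (2 * L) + / (2 * L)) by (field; lra). nra.
Qed.

Lemma gradient_three_point a b c :
  inner (vsub (gh a) (gh c)) (vsub b c) >= - (L / 4) * inner (vsub b a) (vsub b a).
Proof.
  pose proof (inner_pos (vsub b a)).
  destruct (Req_dec L 0) as [HL0|HL0].
  - assert (E : gh a = gh c).
    { apply vsub_eq0, hnorm_eq0. specialize (Hlip a c). rewrite HL0, Rmult_0_l in Hlip.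
      pose proof (hnorm_pos (vsub (gh a) (gh c))). lra. }
    rewrite E, vsub_diag, inner_0_l, HL0. lra.
  - set (g := vsub (gh a) (gh c)).
    pose proof (gradient_cocoercive a c ltac:(lra)) as Co. fold g in Co.
    replace (vsub b c) with (vadd (vsub a c) (vsub b a)) by vext.
    rewrite inner_add_r.
    pose proof (young_inner g (vsub b a) (2 / L) ltac:(apply Rdiv_lt_0_compat; lra)) as Y.
    apply Rabs_le_between in Y.
    replace (2 / L / 2) with (/ L) in Y by (field; lra).
    replace (/ (2 * (2 / L))) with (L / 4) in Y by (field; lra). lra.
Qed.

End SmoothConvex.

(** * Extended reals *)

Lemma ERle_fin_mono x r r' : ERle x (Fin r) -> r <= r' -> ERle x (Fin r').
Proof. destruct x; simpl; intros; auto; lra. Qed.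
Lemma ERaddR_assoc x a b : ERaddR (ERaddR x a) b = ERaddR x (a + b).
Proof. destruct x; simpl; auto. f_equal; ring. Qed.
Lemma ERle_addR_inv x y c : ERle (ERaddR x c) (ERaddR y c) -> ERle x y.
Proof. destruct x, y; simpl; intros; auto; lra. Qed.
Lemma ERadd_finr X a y : ERadd (ERaddR X a) (Fin y) = ERaddR X (a + y).
Proof. destruct X; simpl; auto. f_equal; ring. Qed.
Lemma ERadd_finl X a y : ERadd (Fin y) (ERaddR X a) = ERaddR X (y + a).
Proof. destruct X; simpl; auto. f_equal; ring. Qed.

(* The real part of a finite value; 0 is a junk value for +oo. *)
Definition fin_part (e : ER) : R := match e with Fin r => r | PInf => 0 end.

Lemma argmin_finite {H : Hilbert} (F : H -> ER) (Q : H -> R) xp : proper F ->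
  (forall u, ERle (ERaddR (F xp) (Q xp)) (ERaddR (F u) (Q u))) -> exists v, F xp = Fin v.
Proof.
  intros [u0 Hu0] Hm. specialize (Hm u0). destruct (F u0); [|congruence].
  destruct (F xp); simpl in Hm; [eauto | contradiction].
Qed.

(** * Linear and self-adjoint operators *)

Section Linear.
Context {H1 H2 : Hilbert}.
Variable T : H1 -> H2.
Hypothesis HT : linear_op T.

Lemma lin_add x y : T (vadd x y) = vadd (T x) (T y).
Proof. apply HT. Qed.
Lemma lin_scal a x : T (vscal a x) = vscal a (T x).
Proof. apply HT. Qed.
Lemma lin_0 : T vzero = vzero.
Proof. rewrite <- (vscal_0_l vzero), lin_scal, vscal_0_l. reflexivity. Qed.
Lemma lin_opp x : T (vopp x) = vopp (T x).
Proof. replace (vopp x) with (vscal (-1) x) by vext. rewrite lin_scal. vext. Qed.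
Lemma lin_sub x y : T (vsub x y) = vsub (T x) (T y).
Proof. unfold vsub. rewrite lin_add, lin_opp. reflexivity. Qed.

End Linear.

Lemma bounded_linear_bound {H1 H2 : Hilbert} (T : H1 -> H2) : bounded_linear T ->
  exists C, 0 <= C /\ forall x, hnorm (T x) <= C * hnorm x.
Proof.
  intros [_ [C HC]]. exists (Rabs C). split; [apply Rabs_pos|].
  intro x. eapply Rle_trans; [apply HC|]. apply Rmult_le_compat_r; [apply hnorm_pos | apply Rle_abs].
Qed.

Lemma opnorm_bound {H1 H2 : Hilbert} (T : H1 -> H2) n : linear_op T -> opnorm_is T n ->
  forall x, hnorm (T x) <= n * hnorm x.
Proof.
  intros HT [Hub _] x. destruct (Req_dec (hnorm x) 0) as [E|E].
  - apply hnorm_eq0 in E. subst x. rewrite (lin_0 T HT), !hnorm_0. right; ring.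
  - pose proof (hnorm_pos x).
    assert (Hi : 0 < / hnorm x) by (apply Rinv_0_lt_compat; lra).
    assert (Hu : hnorm (vscal (/ hnorm x) x) <= 1).
    { rewrite hnorm_scal, Rabs_right, Rinv_l; lra. }
    specialize (Hub _ (ex_intro _ _ (conj Hu eq_refl))).
    rewrite (lin_scal T HT), hnorm_scal, Rabs_right in Hub by lra.
    apply Rmult_le_compat_r with (r := hnorm x) in Hub; [|lra].
    rewrite (Rmult_comm (/ _)), Rmult_assoc, Rinv_l in Hub by lra. lra.
Qed.

Lemma opnorm_pos {H1 H2 : Hilbert} (T : H1 -> H2) n : linear_op T -> opnorm_is T n ->
  (exists u, T u <> vzero) -> 0 < n.
Proof.
  intros HT Hn [u Hu]. pose proof (opnorm_bound T n HT Hn u).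
  assert (hnorm (T u) <> 0) by (intro E; apply Hu, hnorm_eq0, E).
  pose proof (hnorm_pos (T u)). pose proof (hnorm_pos u).
  destruct (Rle_lt_dec n 0); auto. exfalso. nra.
Qed.

Lemma young_bounded_op {H1 H2 : Hilbert} (T : H1 -> H2) n (r : H2) u th :
  (forall u, hnorm (T u) <= n * hnorm u) -> 0 < th ->
  inner r (T u) >= - (th / 2 * inner r r + n ^ 2 / (2 * th) * inner u u).
Proof.
  intros Hn Hth. pose proof (young_inner r (T u) th Hth) as Y. apply Rabs_le_between in Y.
  assert (inner (T u) (T u) <= n ^ 2 * inner u u).
  { rewrite <- !hnorm_mul_self. specialize (Hn u). pose proof (hnorm_pos (T u)).
    replace (n ^ 2 * (hnorm u * hnorm u)) with ((n * hnorm u) * (n * hnorm u)) by ring.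
    apply Rmult_le_compat; auto. }
  assert (/ (2 * th) * inner (T u) (T u) <= n ^ 2 / (2 * th) * inner u u).
  { replace (n ^ 2 / (2 * th) * inner u u) with (/ (2 * th) * (n ^ 2 * inner u u)) by (field; lra).
    apply Rmult_le_compat_l; auto. left; apply Rinv_0_lt_compat; lra. }
  lra.
Qed.

Definition self_adjoint {H : Hilbert} (T : H -> H) := forall x y, inner (T x) y = inner x (T y).

Lemma Mnorm2_sub_expand {H : Hilbert} (M : H -> H) (a u w : H) : linear_op M -> self_adjoint M ->
  Mnorm2 M (vsub a u) - Mnorm2 M (vsub a w)
  = - 2 * inner (vsub a u) (M (vsub u w)) - Mnorm2 M (vsub u w).
Proof.
  intros HM HS. replace (vsub a w) with (vadd (vsub a u) (vsub u w)) by vext.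
  set (b0 := vsub a u). set (e := vsub u w). unfold Mnorm2. rewrite (lin_add _ HM).
  autorewrite with inE. rewrite <- (HS e b0), (inner_sym (M e) b0). ring.
Qed.

(* For 0 <= T <= C Id, |T d|^2 <= C <d, T d>: the Cauchy-Schwarz inequality for the
   semi-inner product <x, T y>, applied to d and T d. *)
Lemma psd_image_sq_le {H : Hilbert} (T : H -> H) C :
  0 <= C -> linear_op T -> self_adjoint T -> (forall x, 0 <= inner x (T x)) ->
  (forall x, inner x (T x) <= C * inner x x) ->
  forall d, inner (T d) (T d) <= C * inner d (T d).
Proof.
  intros HC0 HT HS Hp HC d.
  assert (Q : forall x y, inner x (T y) ^ 2 <= inner x (T x) * inner y (T y)).
  { intros x y. apply quadratic_nonneg_discr. intro t. pose proof (Hp (vadd x (vscal t y))) as P.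
    rewrite (lin_add T HT), (lin_scal T HT) in P. autorewrite with inE in P.
    rewrite (inner_sym y (T x)), (HS x y) in P. nra. }
  specialize (Q d (T d)). rewrite <- HS in Q.
  pose proof (HC (T d)). pose proof (Hp d). pose proof (inner_pos (T d)).
  destruct (Req_dec (inner (T d) (T d)) 0) as [E|E].
  - rewrite E. apply Rmult_le_pos; auto.
  - assert (inner (T d) (T d) ^ 2 <= inner d (T d) * (C * inner (T d) (T d))).
    { eapply Rle_trans; [apply Q|]. apply Rmult_le_compat_l; auto. }
    apply Rmult_le_reg_r with (inner (T d) (T d)); [lra|]. nra.
Qed.

Lemma in_Splus_linear {H : Hilbert} (M : H -> H) : in_Splus M -> linear_op M.
Proof. intros [[HM _] _]; exact HM. Qed.
Lemma in_Splus_self_adjoint {H : Hilbert} (M : H -> H) : in_Splus M -> self_adjoint M.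
Proof. intros [_ [HM _]]; exact HM. Qed.
Lemma in_Splus_Mnorm2_pos {H : Hilbert} (M : H -> H) y : in_Splus M -> 0 <= Mnorm2 M y.
Proof. intros [_ [_ HM]]; apply HM. Qed.

Lemma in_Palpha_lower {H : Hilbert} al (T : H -> H) y : in_Palpha al T -> al * inner y y <= Mnorm2 T y.
Proof. intros [_ Hl]. specialize (Hl y). unfold Mnorm2 in *. rewrite inner_scal_r in Hl. lra. Qed.

Lemma in_Palpha_shift_lower {H : Hilbert} (M : H -> H) al c y : 0 <= c ->
  in_Palpha al (op_minus_id M c) -> al * inner y y <= Mnorm2 M y.
Proof.
  intros Hc HP. pose proof (in_Palpha_lower _ _ y HP) as Hl. pose proof (inner_pos y).
  unfold Mnorm2, op_minus_id in *. rewrite inner_sub_r, inner_scal_r in Hl. nra.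
Qed.

Lemma adjoint_Palpha_lower {H1 H2 : Hilbert} (B : H1 -> H2) Bs be y :
  is_adjoint B Bs -> in_Palpha be (fun v => Bs (B v)) -> be * inner y y <= inner (B y) (B y).
Proof. intros Had HP. rewrite (Had y (B y)). apply (in_Palpha_lower _ _ y HP). Qed.

Section OperatorSequence.
Context {H : Hilbert}.
Variable M : nat -> H -> H.
Hypothesis HMs : forall k, in_Splus (M k).
Hypothesis HMd : forall k, loewner_ge (M k) (M (S k)).

Lemma Mnorm2_antitone m k : (m <= k)%nat -> forall x, Mnorm2 (M k) x <= Mnorm2 (M m) x.
Proof. induction 1; intro x; [lra|]. specialize (HMd m0 x). specialize (IHle x). lra. Qed.

Lemma Mnorm2_uniform_bound : exists C, 0 <= C /\ forall k x, Mnorm2 (M k) x <= C * inner x x.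
Proof.
  destruct (HMs 0%nat) as [Hb _]. destruct (bounded_linear_bound _ Hb) as [C [HC HCb]].
  exists C. split; auto. intros k x.
  eapply Rle_trans; [apply (Mnorm2_antitone 0 k ltac:(lia))|].
  unfold Mnorm2. eapply Rle_trans; [apply inner_le_hnorm_mul|]. rewrite <- hnorm_mul_self.
  pose proof (HCb x). pose proof (hnorm_pos x).
  replace (C * (hnorm x * hnorm x)) with (hnorm x * (C * hnorm x)) by ring.
  apply Rmult_le_compat_l; auto.
Qed.

Lemma op_seq_uniform_bound : exists C, 0 <= C /\ forall k d, hnorm (M k d) <= C * hnorm d.
Proof.
  destruct Mnorm2_uniform_bound as [C [HC HCb]]. exists C. split; auto. intros k d.
  pose proof (psd_image_sq_le (M k) C HC (in_Splus_linear _ (HMs k))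
    (in_Splus_self_adjoint _ (HMs k)) (fun x => in_Splus_Mnorm2_pos _ x (HMs k)) (HCb k) d) as P.
  apply Rsqr_incr_0_var; [|apply Rmult_le_pos; auto; apply hnorm_pos].
  unfold Rsqr.
  replace (C * hnorm d * (C * hnorm d)) with (C * (C * (hnorm d * hnorm d))) by ring.
  rewrite !hnorm_mul_self. eapply Rle_trans; [apply P|].
  apply Rmult_le_compat_l; auto. apply HCb.
Qed.

Lemma op_seq_diff_sq_le : exists C, 0 <= C /\ forall m k, (m <= k)%nat -> forall d,
  inner (vsub (M m d) (M k d)) (vsub (M m d) (M k d)) <= C * (Mnorm2 (M m) d - Mnorm2 (M k) d).
Proof.
  destruct Mnorm2_uniform_bound as [C [HC HCb]]. exists C. split; auto. intros m k Hmk d.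
  pose proof (in_Splus_linear _ (HMs m)) as Hm. pose proof (in_Splus_linear _ (HMs k)) as Hk.
  set (T := fun x => vsub (M m x) (M k x)).
  assert (HT : linear_op T).
  { split; intros; unfold T;
      rewrite ?(lin_add _ Hm), ?(lin_add _ Hk), ?(lin_scal _ Hm), ?(lin_scal _ Hk); vext. }
  assert (HS : self_adjoint T).
  { intros x y. unfold T. autorewrite with inE.
    rewrite !(in_Splus_self_adjoint _ (HMs m)), !(in_Splus_self_adjoint _ (HMs k)). ring. }
  assert (Hp : forall x, 0 <= inner x (T x)).
  { intro x. unfold T. autorewrite with inE. pose proof (Mnorm2_antitone m k Hmk x).
    unfold Mnorm2 in *. lra. }
  assert (Hc : forall x, inner x (T x) <= C * inner x x).
  { intro x. unfold T. autorewrite with inE. pose proof (HCb m x).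
    pose proof (in_Splus_Mnorm2_pos _ x (HMs k)). unfold Mnorm2 in *. lra. }
  pose proof (psd_image_sq_le T C HC HT HS Hp Hc d). unfold T, Mnorm2 in *.
  autorewrite with inE in *. lra.
Qed.

(* M k e converges strongly: |M m e - M k e|^2 is bounded by a Cauchy difference of the
   convergent real sequence <e, M k e>. *)
Lemma op_seq_strong_cauchy e : forall eta, 0 < eta ->
  exists m, forall k, (m <= k)%nat -> hnorm (vsub (M m e) (M k e)) < eta.
Proof.
  intros eta Heta.
  destruct op_seq_diff_sq_le as [C [HC HCd]].
  destruct (Un_cv_antitone_bounded_below (fun k => Mnorm2 (M k) e)) as [Qe HQe].
  { intro k. pose proof (HMd k e). lra. }
  { intro k. apply in_Splus_Mnorm2_pos; auto. }
  set (del := eta * eta / (C + 1)). assert (Hdel : 0 < del) by (apply Rdiv_lt_0_compat; nra).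
  destruct (HQe del Hdel) as [m Hm]. exists m. intros k Hk.
  assert (Qe <= Mnorm2 (M k) e).
  { apply (Un_cv_le_eventually _ _ _ k HQe). intros n Hn. apply Mnorm2_antitone; auto. }
  specialize (Hm m (le_n _)). unfold Rdist in Hm. apply Rabs_def2 in Hm.
  assert (HT : inner (vsub (M m e) (M k e)) (vsub (M m e) (M k e)) <= C * del).
  { eapply Rle_trans; [apply HCd; auto|]. apply Rmult_le_compat_l; lra. }
  rewrite <- (sqrt_Rsqr eta) by lra. apply sqrt_lt_1_alt. split; [apply inner_pos|].
  apply Rle_lt_trans with (C * del); auto. unfold del, Rsqr.
  replace (C * (eta * eta / (C + 1))) with (eta * eta * (C / (C + 1))) by (field; lra).
  assert (C / (C + 1) < 1).
  { apply Rmult_lt_reg_r with (C + 1); [lra|]. replace (C / (C + 1) * (C + 1)) with C by (field; lra). lra. }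
  assert (0 < eta * eta) by nra.
  rewrite <- (Rmult_1_r (eta * eta)) at 2. apply Rmult_lt_compat_l; auto.
Qed.

End OperatorSequence.

(** * Optimality conditions of composite minimization problems *)

Section Optimality.
Context {H : Hilbert}.

Definition convex_with_modulus (mu : R) (F : H -> ER) := forall w y t a b, 0 <= t <= 1 ->
  ERle (F w) (Fin a) -> ERle (F y) (Fin b) ->
  ERle (F (vadd (vscal t w) (vscal (1 - t) y)))
       (Fin (t * a + (1 - t) * b - mu / 2 * (t * (1 - t)) * inner (vsub w y) (vsub w y))).

Lemma convex_with_modulus_0 F : convex F -> convex_with_modulus 0 F.
Proof. intros HF w y t a b Ht Ha Hb. eapply ERle_fin_mono; [apply HF; eauto | lra]. Qed.

Lemma strongly_convex_with_modulus F g : strongly_convex g F -> convex_with_modulus g F.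
Proof.
  intros HF w y t a b Ht Ha Hb.
  set (u := vadd (vscal t w) (vscal (1 - t) y)).
  specialize (HF w y t (a - g / 2 * hnorm w ^ 2) (b - g / 2 * hnorm y ^ 2) Ht).
  fold u in HF.
  assert (Hw : ERle (ERaddR (F w) (- (g / 2) * hnorm w ^ 2)) (Fin (a - g / 2 * hnorm w ^ 2)))
    by (destruct (F w); simpl in *; auto; lra).
  assert (Hy : ERle (ERaddR (F y) (- (g / 2) * hnorm y ^ 2)) (Fin (b - g / 2 * hnorm y ^ 2)))
    by (destruct (F y); simpl in *; auto; lra).
  specialize (HF Hw Hy).
  rewrite !hnorm_pow2 in HF.
  assert (E : inner u u
              = t * t * inner w w + 2 * t * (1 - t) * inner w y + (1 - t) * (1 - t) * inner y y).
  { unfold u. autorewrite with inE. rewrite (inner_sym y w). ring. }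
  destruct (F u); simpl in *; auto. autorewrite with inE.
  rewrite (inner_sym y w). rewrite E in HF. nra.
Qed.

Lemma argmin_variational_ineq (F : H -> ER) (Q : H -> R) mu xp Fx (l : H -> R) :
  0 <= mu -> F xp = Fin Fx -> convex_with_modulus mu F ->
  (forall u, ERle (ERaddR (F xp) (Q xp)) (ERaddR (F u) (Q u))) ->
  (forall d eta tau, 0 < eta -> 0 < tau -> exists t, 0 < t /\ t <= 1 /\ t <= tau /\
      Q (vadd xp (vscal t d)) - Q xp <= t * (l d + eta)) ->
  forall w a, ERle (F w) (Fin a) ->
    a >= Fx - l (vsub w xp) + mu / 2 * inner (vsub w xp) (vsub w xp).
Proof.
  intros Hmu HFx Hsc Hmin HQ w a Hw. set (d := vsub w xp).
  set (n := inner d d). assert (Hn : 0 <= n) by apply inner_pos.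
  apply Rle_ge. apply (le_epsilon_scaled _ _ (1 + mu / 2 * n)); [nra|].
  intros e He.
  destruct (HQ d e e He He) as [t [Ht0 [Ht1 [Hte Ht]]]].
  assert (HFxp : ERle (F xp) (Fin Fx)) by (rewrite HFx; simpl; lra).
  pose proof (Hsc w xp t a Fx ltac:(lra) Hw HFxp) as Hs.
  rewrite (vsegment_eq xp w t) in Hs. fold d n in Hs.
  specialize (Hmin (vadd xp (vscal t d))). rewrite HFx in Hmin.
  destruct (F (vadd xp (vscal t d))) as [fu|]; simpl in Hs, Hmin; [|contradiction].
  assert (a - Fx - mu / 2 * (1 - t) * n + l d + e >= 0).
  { destruct (Rle_lt_dec 0 (a - Fx - mu / 2 * (1 - t) * n + l d + e)); [lra|].
    assert (t * (a - Fx - mu / 2 * (1 - t) * n + l d + e) < 0) by (apply Rmult_pos_neg; lra).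
    nra. }
  assert (mu / 2 * t * n <= e * (mu / 2 * n)).
  { replace (mu / 2 * t * n) with (t * (mu / 2 * n)) by ring.
    apply Rmult_le_compat_r; [apply Rmult_le_pos|]; lra. }
  nra.
Qed.

Lemma quadratic_directional_bound (Q : H -> R) xp (l q : H -> R) :
  (forall d t, Q (vadd xp (vscal t d)) = Q xp + t * l d + t ^ 2 * q d) ->
  forall d eta tau, 0 < eta -> 0 < tau -> exists t, 0 < t /\ t <= 1 /\ t <= tau /\
      Q (vadd xp (vscal t d)) - Q xp <= t * (l d + eta).
Proof.
  intros HQ d eta tau He Ht.
  set (t := Rmin (Rmin 1 tau) (eta / (Rabs (q d) + 1))).
  pose proof (Rabs_pos (q d)).
  assert (0 < eta / (Rabs (q d) + 1)) by (apply Rdiv_lt_0_compat; lra).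
  assert (t <= Rmin 1 tau) by apply Rmin_l.
  pose proof (Rmin_l 1 tau). pose proof (Rmin_r 1 tau).
  assert (Hm2 : t <= eta / (Rabs (q d) + 1)) by apply Rmin_r.
  assert (0 < t) by (unfold t; repeat apply Rmin_glb_lt; lra).
  exists t. repeat split; try lra.
  rewrite HQ.
  assert (t * q d <= eta).
  { assert (t * q d <= t * Rabs (q d)) by (apply Rmult_le_compat_l; [lra | apply Rle_abs]).
    assert (t * Rabs (q d) <= eta / (Rabs (q d) + 1) * (Rabs (q d) + 1))
      by (apply Rmult_le_compat; lra).
    replace (eta / (Rabs (q d) + 1) * (Rabs (q d) + 1)) with eta in * by (field; lra).
    lra. }
  nra.
Qed.

Lemma differentiable_directional_bound (h : H -> R) gh (c : H -> R) xp :
  frechet_gradient h gh ->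
  (forall d t, c (vadd xp (vscal t d)) = c xp + t * c d) ->
  forall d eta tau, 0 < eta -> 0 < tau -> exists t, 0 < t /\ t <= 1 /\ t <= tau /\
      (h (vadd xp (vscal t d)) + c (vadd xp (vscal t d))) - (h xp + c xp)
      <= t * ((inner (gh xp) d + c d) + eta).
Proof.
  intros Hg Hc d eta tau He Ht.
  set (e' := eta / (hnorm d + 1)). pose proof (hnorm_pos d).
  assert (He' : 0 < e') by (apply Rdiv_lt_0_compat; lra).
  destruct (Hg xp e' He') as [delta [Hdel Hf]].
  destruct (small_step d delta tau Hdel Ht) as [t [Ht0 [Ht1 [Htt Htd]]]].
  exists t. repeat split; auto.
  specialize (Hf _ Htd). rewrite inner_scal_r, hnorm_scal, (Rabs_right t) in Hf by lra.
  apply Rabs_le_between in Hf. rewrite Hc.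
  assert (e' * (t * hnorm d) <= t * eta).
  { replace (e' * (t * hnorm d)) with (t * (eta * (hnorm d / (hnorm d + 1))))
      by (unfold e'; field; lra).
    apply Rmult_le_compat_l; [lra|].
    rewrite <- (Rmult_1_r eta) at 2. apply Rmult_le_compat_l; [lra|].
    apply Rmult_le_reg_r with (hnorm d + 1); [lra|].
    replace (hnorm d / (hnorm d + 1) * (hnorm d + 1)) with (hnorm d) by (field; lra). lra. }
  lra.
Qed.

End Optimality.

(** * Closed convex sets and weak convergence *)

Lemma exists_minimizing_sequence {T : Type} (C : T -> Prop) (J : T -> R) v0 m0 :
  C v0 -> (forall v, C v -> J v >= - m0) ->
  exists m a, (forall v, C v -> J v >= m) /\ forall n, C (a n) /\ J (a n) < m + / INR (S n).
Proof.
  intros Hv0 Jlb.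
  set (E := fun r => exists v, C v /\ r = - J v).
  assert (HEb : bound E) by (exists m0; intros r [v [Hv ->]]; specialize (Jlb v Hv); lra).
  destruct (completeness E HEb (ex_intro _ (- J v0) (ex_intro _ v0 (conj Hv0 eq_refl))))
    as [s [Hub Hlub]].
  exists (- s).
  destruct (choice (fun n v => C v /\ J v < - s + / INR (S n))) as [a Ha].
  - intro n. assert (He : 0 < / INR (S n)) by (apply Rinv_0_lt_compat, lt_0_INR; lia).
    apply NNPP. intro Hn.
    assert (is_upper_bound E (s - / INR (S n))).
    { intros r [v [Hv ->]]. destruct (Rle_lt_dec (- J v) (s - / INR (S n))); auto.
      exfalso. apply Hn. exists v. split; auto. lra. }
    specialize (Hlub _ H). lra.
  - exists a. split; auto. intros v Hv. assert (E (- J v)) by (exists v; auto).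
    specialize (Hub _ H). lra.
Qed.

Section ClosedConvex.
Context {H : Hilbert}.

Definition closed_set (C : H -> Prop) := forall l,
  (forall e, 0 < e -> exists v, C v /\ hnorm (vsub v l) < e) -> C l.
Definition convex_set (C : H -> Prop) := forall a b t, C a -> C b -> 0 <= t <= 1 ->
  C (vadd (vscal t a) (vscal (1 - t) b)).

Variables (C : H -> Prop) (phi : H -> R) (K : R).
Hypothesis Hcl : closed_set C.
Hypothesis Hcv : convex_set C.
Hypothesis HK : 0 <= K.
Hypothesis Haff : forall a b t, C a -> C b -> 0 <= t <= 1 ->
  phi (vadd (vscal t a) (vscal (1 - t) b)) = t * phi a + (1 - t) * phi b.
Hypothesis Hlip : forall a b, C a -> C b -> Rabs (phi a - phi b) <= K * hnorm (vsub a b).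

(* The minimizer of 1/2 |v|^2 - phi v over C; for phi = <w, .> it is the projection of w. *)
Let J v := / 2 * inner v v - phi v.

Lemma affine_penalty_continuous l : C l -> forall e, 0 < e -> exists d, 0 < d /\
  forall v, C v -> hnorm (vsub v l) < d -> J l <= J v + e.
Proof.
  intros Cl e He.
  set (R0 := 2 * hnorm l + 1 + K).
  assert (HR : 0 < R0) by (unfold R0; pose proof (hnorm_pos l); lra).
  exists (Rmin 1 (e / R0)). split; [apply Rmin_glb_lt; [lra | apply Rdiv_lt_0_compat; lra]|].
  intros v Cv Hv. unfold J. set (w := vsub v l).
  replace v with (vadd l w) in * by (unfold w; vext).
  replace (vsub (vadd l w) l) with w in Hv by vext.
  specialize (Hlip l (vadd l w) Cl Cv).
  replace (vsub l (vadd l w)) with (vopp w) in Hlip by vext. rewrite hnorm_opp in Hlip.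
  apply Rabs_le_between in Hlip.
  autorewrite with inE. rewrite (inner_sym w l).
  pose proof (cauchy_schwarz l w) as Cs. apply Rabs_le_between in Cs. rewrite <- (hnorm_mul_self w).
  pose proof (hnorm_pos w). pose proof (hnorm_pos l).
  pose proof (Rmin_l 1 (e / R0)). pose proof (Rmin_r 1 (e / R0)).
  assert (hnorm w * R0 <= e).
  { apply Rle_trans with (e / R0 * R0); [apply Rmult_le_compat_r; lra|]. right; field; lra. }
  unfold R0 in *. nra.
Qed.

Lemma affine_penalty_attains_min v0 : C v0 -> exists l, C l /\ forall v, C v -> J l <= J v.
Proof.
  intro Hv0.
  destruct (exists_minimizing_sequence C J v0 (K * K / 2 + Rabs (phi v0) + K * hnorm v0) Hv0)
    as [m [a [Jge Ha]]].
  { intros v Hv. unfold J. specialize (Hlip v v0 Hv Hv0). apply Rabs_le_between in Hlip.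
    pose proof (hnorm_sub_le v v0). rewrite <- hnorm_mul_self.
    pose proof (hnorm_pos v). pose proof (hnorm_pos v0). pose proof (Rle_abs (phi v0)).
    assert (K * hnorm (vsub v v0) <= K * (hnorm v + hnorm v0)) by (apply Rmult_le_compat_l; lra).
    assert (0 <= (hnorm v - K) ^ 2) by apply pow2_ge_0. nra. }
  (* parallelogram law: near-minimizers are close to each other *)
  assert (Par : forall x y, C x -> C y -> inner (vsub x y) (vsub x y) <= 4 * (J x + J y - 2 * m)).
  { intros x y Hx Hy.
    pose proof (Jge _ (Hcv x y (/ 2) Hx Hy ltac:(lra))) as Jm.
    unfold J in *. rewrite (Haff x y (/ 2) Hx Hy ltac:(lra)) in Jm.
    replace (1 - / 2) with (/ 2) in * by field.
    rewrite inner_vsub_expand. autorewrite with inE in Jm. rewrite (inner_sym y x) in Jm. lra. }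
  destruct (hcomplete H a) as [l Hl].
  { intros e He. destruct (archimed_cor1 (e * e / 8)) as [N [HN HN0]];
      [apply Rdiv_lt_0_compat; nra|].
    exists N. intros p q Hp Hq. fold (vsub (a p) (a q)).
    destruct (Ha p) as [Cp Jp]. destruct (Ha q) as [Cq Jq].
    pose proof (Par _ _ Cp Cq).
    assert (/ INR (S p) <= / INR N) by (apply Rinv_le_contravar; [apply lt_0_INR | apply le_INR]; lia).
    assert (/ INR (S q) <= / INR N) by (apply Rinv_le_contravar; [apply lt_0_INR | apply le_INR]; lia).
    rewrite <- (sqrt_Rsqr e) by lra. apply sqrt_lt_1_alt. split; [apply inner_pos|].
    unfold Rsqr. lra. }
  change (forall e, 0 < e -> exists N, forall n, (N <= n)%nat -> hnorm (vsub (a n) l) < e) in Hl.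
  assert (Cl : C l).
  { apply Hcl. intros e He. destruct (Hl e He) as [N HN]. exists (a N). split; [apply Ha | apply HN; lia]. }
  exists l. split; auto. intros v Hv. specialize (Jge v Hv).
  cut (J l <= m); [lra|].
  apply le_epsilon. intros e He.
  destruct (affine_penalty_continuous l Cl (e / 2) ltac:(lra)) as [d [Hd Hcont]].
  destruct (Hl d Hd) as [N1 HN1].
  destruct (archimed_cor1 (e / 2) ltac:(lra)) as [N2 [HN2 HN20]].
  set (n := max N1 N2). destruct (Ha n) as [Cn Jn].
  assert (/ INR (S n) <= / INR N2)
    by (apply Rinv_le_contravar; [apply lt_0_INR | apply le_INR]; unfold n; lia).
  specialize (Hcont (a n) Cn (HN1 n ltac:(unfold n; lia))). lra.
Qed.

Lemma affine_penalty_min_variational l : C l -> (forall v, C v -> J l <= J v) ->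
  forall v, C v -> inner l (vsub v l) >= phi v - phi l.
Proof.
  intros Cl Jl v Hv.
  set (n2 := inner (vsub v l) (vsub v l)).
  assert (Hn2 : 0 <= n2) by apply inner_pos.
  apply Rle_ge. apply (le_epsilon_scaled _ _ (n2 / 2)); [lra|]. intros e He.
  set (t := Rmin 1 e).
  assert (Ht : 0 < t) by (apply Rmin_glb_lt; lra).
  assert (Ht1 : t <= 1) by apply Rmin_l. assert (Hte : t <= e) by apply Rmin_r.
  pose proof (Jl _ (Hcv v l t Hv Cl ltac:(lra))) as Jw. unfold J in Jw.
  rewrite (Haff v l t Hv Cl ltac:(lra)) in Jw.
  assert (Ew : / 2 * inner (vadd (vscal t v) (vscal (1 - t) l)) (vadd (vscal t v) (vscal (1 - t) l))
     = / 2 * inner l l + t * inner l (vsub v l) + t * t / 2 * n2).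
  { unfold n2. autorewrite with inE. rewrite (inner_sym v l). field. }
  rewrite Ew in Jw.
  assert (inner l (vsub v l) - (phi v - phi l) + t / 2 * n2 >= 0).
  { destruct (Rle_lt_dec 0 (inner l (vsub v l) - (phi v - phi l) + t / 2 * n2)); [lra|].
    assert (t * (inner l (vsub v l) - (phi v - phi l) + t / 2 * n2) < 0)
      by (apply Rmult_pos_neg; lra).
    nra. }
  assert (t / 2 * n2 <= e * (n2 / 2)).
  { replace (t / 2 * n2) with (t * (n2 / 2)) by field. apply Rmult_le_compat_r; lra. }
  lra.
Qed.

Lemma affine_penalty_minimizer v0 : C v0 ->
  exists u, C u /\ forall v, C v -> inner u (vsub v u) >= phi v - phi u.
Proof.
  intro Hv0. destruct (affine_penalty_attains_min v0 Hv0) as [u [Cu Hu]].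
  exists u. split; auto. apply affine_penalty_min_variational; auto.
Qed.

End ClosedConvex.

Lemma inner_affine {H : Hilbert} (w a b : H) t :
  inner w (vadd (vscal t a) (vscal (1 - t) b)) = t * inner w a + (1 - t) * inner w b.
Proof. autorewrite with inE. ring. Qed.

Lemma inner_lipschitz {H : Hilbert} (w a b : H) :
  Rabs (inner w a - inner w b) <= hnorm w * hnorm (vsub a b).
Proof. replace (inner w a - inner w b) with (inner w (vsub a b)) by (autorewrite with inE; ring).
  apply cauchy_schwarz. Qed.

Lemma closed_convex_projection {H : Hilbert} (C : H -> Prop) (w v0 : H) :
  closed_set C -> convex_set C -> C v0 ->
  exists pi, C pi /\ forall v, C v -> inner pi (vsub v pi) >= inner w v - inner w pi.
Proof.
  intros Hcl Hcv Hv0.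
  apply (affine_penalty_minimizer C (fun v => inner w v) (hnorm w) Hcl Hcv (hnorm_pos w)
           (fun a b t _ _ _ => inner_affine w a b t) (fun a b _ _ => inner_lipschitz w a b) v0 Hv0).
Qed.

Section WeakConvergence.
Context {H : Hilbert}.

Definition strong_cv (u : nat -> H) (l : H) := Un_cv (fun n => hnorm (vsub (u n) l)) 0.

Lemma weak_cv_subseq (u : nat -> H) l s : strict_incr s -> weak_cv u l -> weak_cv (fun n => u (s n)) l.
Proof. intros Hs Hu w. apply (Un_cv_subseq (fun n => inner (u n) w)); auto. Qed.

Lemma weak_cv_perturb (u v : nat -> H) l : weak_cv u l ->
  Un_cv (fun n => hnorm (vsub (v n) (u n))) 0 -> weak_cv v l.
Proof.
  intros Hu Hd w. apply Un_cv_of_sub_limit.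
  replace 0 with (0 + 0) by ring.
  apply (Un_cv_ext (fun n => (inner (u n) w - inner l w) + inner (vsub (v n) (u n)) w)).
  { intro n. autorewrite with inE. ring. }
  apply CV_plus; [apply Un_cv_sub_limit, Hu|].
  apply (Un_cv_squeeze0 _ (fun n => hnorm w * hnorm (vsub (v n) (u n)))).
  - intro n. rewrite inner_sym. apply cauchy_schwarz.
  - apply Un_cv_scal0; auto.
Qed.

Lemma strong_cv_weak (u : nat -> H) l : strong_cv u l -> weak_cv u l.
Proof.
  intro Hu. apply (weak_cv_perturb (fun _ => l)); [intro; apply Un_cv_const|].
  exact Hu.
Qed.

Lemma weak_strong_inner_cv (u : nat -> H) l (w : nat -> H) m K :
  weak_cv u l -> (forall n, hnorm (u n) <= K) -> strong_cv w m ->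
  Un_cv (fun n => inner (u n) (w n)) (inner l m).
Proof.
  intros Hu HK Hw. apply Un_cv_of_sub_limit. replace 0 with (0 + 0) by ring.
  apply (Un_cv_ext (fun n => (inner (u n) m - inner l m) + inner (u n) (vsub (w n) m))).
  { intro n. autorewrite with inE. ring. }
  apply CV_plus; [apply Un_cv_sub_limit, Hu|].
  apply (Un_cv_squeeze0 _ (fun n => K * hnorm (vsub (w n) m))).
  - intro n. eapply Rle_trans; [apply cauchy_schwarz|].
    apply Rmult_le_compat_r; [apply hnorm_pos | auto].
  - apply Un_cv_scal0, Hw.
Qed.

Lemma strong_cv_bounded (u : nat -> H) l : strong_cv u l -> exists Ku, forall n, hnorm (u n) <= Ku.
Proof.
  intro Hu. destruct (Un_cv_bounded _ _ Hu) as [Kb HK]. exists (Kb + hnorm l). intro n.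
  specialize (HK n). rewrite Rabs_pos_eq in HK by apply hnorm_pos.
  pose proof (hnorm_le_sub_add (u n) l). lra.
Qed.

Lemma strong_cv_steps0 (u : nat -> H) l : strong_cv u l -> Un_cv (fun k => hnorm (vsub (u (S k)) (u k))) 0.
Proof.
  intro Hu. apply (Un_cv_squeeze0 _ (fun k => hnorm (vsub (u (S k)) l) + hnorm (vsub (u k) l))).
  - intro n. rewrite Rabs_pos_eq by apply hnorm_pos. rewrite (hnorm_sub_sym (u n) l).
    apply hnorm_sub_triangle.
  - replace 0 with (0 + 0) by ring. apply CV_plus; auto. apply (Un_cv_shift (fun n => hnorm (vsub (u n) l))); auto.
Qed.

(* Mazur: closed convex sets are weakly sequentially closed.  With pi the projection of
   the weak limit l onto C, the inequalities <u n - pi, pi - l> >= 0 pass to the limit. *)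
Lemma weak_limit_closed_convex (C : H -> Prop) (u : nat -> H) l N0 :
  closed_set C -> convex_set C -> (forall n, (N0 <= n)%nat -> C (u n)) -> weak_cv u l -> C l.
Proof.
  intros Hcl Hcv HC Hu.
  destruct (closed_convex_projection C l (u N0) Hcl Hcv (HC N0 (le_n _))) as [pi [Cpi Hpi]].
  assert (Hge : forall n, (N0 <= n)%nat -> 0 <= inner (u n) (vsub pi l) - inner pi (vsub pi l)).
  { intros n Hn. specialize (Hpi (u n) (HC n Hn)). autorewrite with inE in *.
    rewrite (inner_sym (u n) pi), (inner_sym (u n) l), (inner_sym l pi) in *. lra. }
  assert (Hlim : Un_cv (fun n => inner (u n) (vsub pi l) - inner pi (vsub pi l))
                       (inner l (vsub pi l) - inner pi (vsub pi l)))
    by (apply CV_minus; [apply Hu | apply Un_cv_const]).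
  pose proof (Un_cv_ge_eventually _ _ _ N0 Hlim Hge).
  replace l with pi; auto. apply vsub_eq0, inner_def.
  pose proof (inner_pos (vsub pi l)). autorewrite with inE in *. lra.
Qed.

End WeakConvergence.

(* The limit of a convergent real sequence, 0 (junk) if it diverges. *)
Definition seq_lim (u : nat -> R) : R :=
  match excluded_middle_informative (exists l, Un_cv u l) with
  | left e => proj1_sig (constructive_indefinite_description _ e)
  | right _ => 0 end.

Lemma seq_lim_cv u : (exists l, Un_cv u l) -> Un_cv u (seq_lim u).
Proof.
  intro Hex. unfold seq_lim. destruct excluded_middle_informative as [e|e]; [|contradiction].
  destruct (constructive_indefinite_description _ e); simpl; auto.
Qed.

Section WeakCompactness.
Context {H : Hilbert}.
Variable u : nat -> H.
Variable K : R.
Hypothesis Hb : forall n, hnorm (u n) <= K.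

Inductive in_span : H -> Prop :=
| in_span_0 : in_span vzero
| in_span_u m : in_span (u m)
| in_span_add a b : in_span a -> in_span b -> in_span (vadd a b)
| in_span_scal t a : in_span a -> in_span (vscal t a).

Definition in_closed_span (w : H) := forall e, 0 < e -> exists s, in_span s /\ hnorm (vsub s w) < e.

Lemma in_closed_span_span s : in_span s -> in_closed_span s.
Proof. intros Hs e He. exists s. split; auto. rewrite vsub_diag, hnorm_0. auto. Qed.

Lemma in_closed_span_add a b : in_closed_span a -> in_closed_span b -> in_closed_span (vadd a b).
Proof.
  intros Ha Hb' e He. destruct (Ha (e / 2) ltac:(lra)) as [s1 [S1 N1]].
  destruct (Hb' (e / 2) ltac:(lra)) as [s2 [S2 N2]]. exists (vadd s1 s2). split; [constructor; auto|].
  replace (vsub (vadd s1 s2) (vadd a b)) with (vadd (vsub s1 a) (vsub s2 b)) by vext.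
  eapply Rle_lt_trans; [apply hnorm_triangle | lra].
Qed.

Lemma in_closed_span_scal t a : in_closed_span a -> in_closed_span (vscal t a).
Proof.
  intros Ha e He. pose proof (Rabs_pos t).
  destruct (Ha (e / (Rabs t + 1))) as [s [Ss Ns]]; [apply Rdiv_lt_0_compat; lra|].
  exists (vscal t s). split; [constructor; auto|].
  replace (vsub (vscal t s) (vscal t a)) with (vscal t (vsub s a)) by vext.
  rewrite hnorm_scal. pose proof (hnorm_pos (vsub s a)).
  apply Rle_lt_trans with ((Rabs t + 1) * hnorm (vsub s a)); [nra|].
  apply Rmult_lt_compat_l with (r := Rabs t + 1) in Ns; [|lra].
  replace ((Rabs t + 1) * (e / (Rabs t + 1))) with e in Ns by (field; lra). lra.
Qed.

Lemma in_closed_span_sub a b : in_closed_span a -> in_closed_span b -> in_closed_span (vsub a b).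
Proof.
  intros Ha Hb'. replace (vsub a b) with (vadd a (vscal (-1) b)) by vext.
  apply in_closed_span_add, in_closed_span_scal; auto.
Qed.

Lemma in_closed_span_closed : closed_set in_closed_span.
Proof.
  intros l Hl e He. destruct (Hl (e / 2) ltac:(lra)) as [v [Vv Nv]].
  destruct (Vv (e / 2) ltac:(lra)) as [s [Ss Ns]]. exists s. split; auto.
  eapply Rle_lt_trans; [apply (hnorm_sub_triangle s v l) | lra].
Qed.

Lemma in_closed_span_convex : convex_set in_closed_span.
Proof. intros a b t Ha Hb' _. apply in_closed_span_add; apply in_closed_span_scal; auto. Qed.

Lemma orthogonal_projection_closed_span w : exists pi, in_closed_span pi /\
  forall s, in_closed_span s -> inner (vsub pi w) s = 0.
Proof.
  destruct (closed_convex_projection in_closed_span w vzero in_closed_span_closed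
              in_closed_span_convex (in_closed_span_span _ in_span_0)) as [pi [Vpi Hpi]].
  exists pi. split; auto. intros s Hs.
  (* the variational inequality at pi + s and pi - s *)
  pose proof (Hpi _ (in_closed_span_add _ _ Vpi Hs)) as P1.
  pose proof (Hpi _ (in_closed_span_sub _ _ Vpi Hs)) as P2.
  replace (vsub (vadd pi s) pi) with s in P1 by vext.
  replace (vsub (vsub pi s) pi) with (vopp s) in P2 by vext.
  autorewrite with inE in *. rewrite (inner_sym w s) in *. lra.
Qed.

Lemma closed_span_riesz (phi : H -> R) C : 0 <= C ->
  (forall a b, in_closed_span a -> in_closed_span b -> phi (vadd a b) = phi a + phi b) ->
  (forall t a, in_closed_span a -> phi (vscal t a) = t * phi a) ->
  (forall a, in_closed_span a -> Rabs (phi a) <= C * hnorm a) ->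
  exists r, in_closed_span r /\ forall s, in_closed_span s -> inner r s = phi s.
Proof.
  intros HC Hadd Hsc Hbd.
  assert (Hsub : forall a b, in_closed_span a -> in_closed_span b -> phi (vsub a b) = phi a - phi b).
  { intros a b Ha Hb'. replace (vsub a b) with (vadd a (vscal (-1) b)) by vext.
    rewrite Hadd, Hsc; auto; [ring | apply in_closed_span_scal; auto]. }
  destruct (affine_penalty_minimizer in_closed_span phi C in_closed_span_closed
              in_closed_span_convex HC) with (v0 := @vzero H) as [r [Vr Hr]].
  - intros a b t Ha Hb' _. rewrite Hadd, !Hsc; auto; apply in_closed_span_scal; auto.
  - intros a b Ha Hb'. rewrite <- Hsub by auto. apply Hbd, in_closed_span_sub; auto.
  - apply in_closed_span_span, in_span_0.
  - exists r. split; auto. intros s Hs.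
    pose proof (Hr _ (in_closed_span_add _ _ Vr Hs)) as P1.
    pose proof (Hr _ (in_closed_span_sub _ _ Vr Hs)) as P2.
    rewrite Hadd in P1 by auto. rewrite Hsub in P2 by auto.
    replace (vsub (vadd r s) r) with s in P1 by vext.
    replace (vsub (vsub r s) r) with (vopp s) in P2 by vext.
    rewrite inner_opp_r in P2. lra.
Qed.

Lemma diagonal_inner_cv : exists d, strict_incr d /\
  forall w, in_closed_span w -> exists l, Un_cv (fun j => inner (u (d j)) w) l.
Proof.
  pose proof (Hb 0%nat). pose proof (hnorm_pos (u 0%nat)).
  destruct (diagonal_subseq (fun m n => inner (u n) (u m))) as [d [Hd Hdc]].
  { intro m. exists (K * K). intro n. eapply Rle_trans; [apply cauchy_schwarz|].
    apply Rmult_le_compat; try apply hnorm_pos; auto. }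
  exists d. split; auto.
  assert (Hspan : forall s, in_span s -> exists l, Un_cv (fun j => inner (u (d j)) s) l).
  { induction 1 as [| m | a b _ [l1 Cv1] _ [l2 Cv2] | t a _ [l1 Cv1]].
    - exists 0. apply (Un_cv_ext (fun _ => 0)); [intro; rewrite inner_0_r; auto | apply Un_cv_const].
    - apply Hdc.
    - exists (l1 + l2). apply (Un_cv_ext (fun j => inner (u (d j)) a + inner (u (d j)) b)).
      { intro; rewrite inner_add_r; auto. }
      apply CV_plus; auto.
    - exists (t * l1). apply (Un_cv_ext (fun j => t * inner (u (d j)) a)).
      { intro; rewrite inner_scal_r; auto. }
      apply CV_mult; auto. apply Un_cv_const. }
  (* on the closure, the sequences are Cauchy by a 3-epsilon argument *)
  intros w Hw. destruct (R_complete (fun j => inner (u (d j)) w)) as [l Hl]; [|eauto].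
  intros e He. destruct (Hw (e / (3 * (K + 1)))) as [s [Ss Ns]]; [apply Rdiv_lt_0_compat; lra|].
  destruct (Hspan s Ss) as [ls Hls].
  destruct (Un_cv_cauchy _ _ Hls (e / 3) ltac:(lra)) as [N HN]. exists N. intros n m Hn Hm.
  specialize (HN n m Hn Hm). unfold Rdist in *.
  assert (B1 : forall j, Rabs (inner (u (d j)) w - inner (u (d j)) s) <= e / 3).
  { intro j. eapply Rle_trans; [apply inner_lipschitz|].
    apply Rle_trans with (K * (e / (3 * (K + 1)))).
    - apply Rmult_le_compat; try apply hnorm_pos; auto. rewrite hnorm_sub_sym; lra.
    - apply Rle_trans with ((K + 1) * (e / (3 * (K + 1)))); [|right; field; lra].
      apply Rmult_le_compat_r; [left; apply Rdiv_lt_0_compat|]; lra. }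
  pose proof (B1 n) as B1n. pose proof (B1 m) as B1m.
  apply Rabs_le_between in B1n. apply Rabs_le_between in B1m.
  apply Rabs_def1; apply Rabs_def2 in HN; lra.
Qed.

Lemma weak_seq_compact : exists s, strict_incr s /\ exists l, weak_cv (fun n => u (s n)) l.
Proof.
  pose proof (Hb 0%nat). pose proof (hnorm_pos (u 0%nat)).
  destruct diagonal_inner_cv as [d [Hd Hdc]].
  set (phi := fun w => seq_lim (fun j => inner (u (d j)) w)).
  assert (Hphi : forall w, in_closed_span w -> Un_cv (fun j => inner (u (d j)) w) (phi w))
    by (intros w Hw; apply seq_lim_cv, Hdc, Hw).
  destruct (closed_span_riesz phi K ltac:(lra)) as [r [Vr Hr]].
  - intros a b Ha Hb'. apply (UL_sequence (fun j => inner (u (d j)) (vadd a b))).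
    + apply Hphi, in_closed_span_add; auto.
    + apply (Un_cv_ext (fun j => inner (u (d j)) a + inner (u (d j)) b)).
      { intro; rewrite inner_add_r; auto. }
      apply CV_plus; apply Hphi; auto.
  - intros t a Ha. apply (UL_sequence (fun j => inner (u (d j)) (vscal t a))).
    + apply Hphi, in_closed_span_scal; auto.
    + apply (Un_cv_ext (fun j => t * inner (u (d j)) a)).
      { intro; rewrite inner_scal_r; auto. }
      apply CV_mult; [apply Un_cv_const | apply Hphi; auto].
  - intros a Ha. apply (Un_cv_le_eventually _ _ _ 0 (cv_cvabs _ _ (Hphi _ Ha))).
    intros n _. eapply Rle_trans; [apply cauchy_schwarz|].
    apply Rmult_le_compat_r; [apply hnorm_pos | auto].
  - exists d. split; auto. exists r. intro w.
    (* only the component of w in the closed span is seen by the u n *)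
    destruct (orthogonal_projection_closed_span w) as [pi [Vpi Orth]].
    assert (Hpiw : forall s, in_closed_span s -> inner s w = inner s pi).
    { intros s Hs. specialize (Orth s Hs). autorewrite with inE in Orth.
      rewrite (inner_sym s pi), (inner_sym s w). lra. }
    apply (Un_cv_ext (fun j => inner (u (d j)) pi)).
    { intro j. symmetry. apply Hpiw, in_closed_span_span, in_span_u. }
    rewrite Hpiw, Hr by auto. apply Hphi; auto.
Qed.

End WeakCompactness.

Section Sublevel.
Context {T : Hilbert}.
Variables (F : T -> ER) (h : T -> R) (gh : T -> T).
Hypothesis HF : lsc F.
Hypothesis HFc : convex_with_modulus 0 F.
Hypothesis Hhc : convex_real h.
Hypothesis Hhg : frechet_gradient h gh.

Definition sublevel lam w := exists r, F w = Fin r /\ r + h w <= lam.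

(* If F + h exceeded lam at l, lower semicontinuity of F and continuity of h would keep it
   above lam on a ball around l. *)
Lemma sublevel_closed lam : closed_set (sublevel lam).
Proof.
  intros l Hl.
  assert (Hball : forall a z, 0 < z -> ~ ERle (F l) (Fin (a - h l)) -> lam + z <= a -> False).
  { intros a z Hz Ha Hla. destruct (HF l (a - h l)) as [d1 [Hd1 Hn]]; auto.
    destruct (frechet_continuous h gh Hhg l z Hz) as [d2 [Hd2 Hc]].
    destruct (Hl (Rmin d1 d2) ltac:(apply Rmin_glb_lt; auto)) as [v [[rv [Ev Hv]] Nv]].
    apply (Hn v); [pose proof (Rmin_l d1 d2); lra|].
    rewrite Ev. simpl. pose proof (Rmin_r d1 d2).
    specialize (Hc v ltac:(lra)). apply Rabs_def2 in Hc. lra. }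
  destruct (F l) as [rl|] eqn:El.
  - exists rl. split; auto. destruct (Rle_lt_dec (rl + h l) lam) as [|Hlt]; auto. exfalso.
    apply (Hball (lam + (rl + h l - lam) / 2) ((rl + h l - lam) / 2)); simpl; lra.
  - exfalso. apply (Hball (lam + 1) 1); simpl; auto; lra.
Qed.

Lemma sublevel_convex lam : convex_set (sublevel lam).
Proof.
  intros a b t [ra [Ea Ha]] [rb [Eb Hb]] Ht.
  assert (Fa : ERle (F a) (Fin ra)) by (rewrite Ea; simpl; lra).
  assert (Fb : ERle (F b) (Fin rb)) by (rewrite Eb; simpl; lra).
  pose proof (HFc a b t ra rb Ht Fa Fb) as Hc.
  pose proof (Hhc a b t (h a) (h b) Ht (Rle_refl _) (Rle_refl _)) as Hh. simpl in Hh.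
  destruct (F (vadd (vscal t a) (vscal (1 - t) b))) as [r|] eqn:Er; simpl in Hc; [|contradiction].
  exists r. split; auto. replace (0 / 2) with 0 in Hc by field. nra.
Qed.

Lemma sublevel_weak_limit (u : nat -> T) l (rr Rr : nat -> R) lam :
  weak_cv u l -> (forall j, F (u j) = Fin (rr j)) -> (forall j, rr j + h (u j) <= Rr j) ->
  Un_cv Rr lam -> sublevel lam l.
Proof.
  intros Hu HFu Hr HR.
  assert (Hall : forall e, 0 < e -> sublevel (lam + e) l).
  { intros e He. destruct (HR e He) as [N HN].
    apply (weak_limit_closed_convex _ u l N (sublevel_closed (lam + e)) (sublevel_convex (lam + e)));
      auto.
    intros n Hn. exists (rr n). split; auto. specialize (HN n Hn). unfold Rdist in HN.
    apply Rabs_def2 in HN. specialize (Hr n). lra. }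
  destruct (Hall 1 ltac:(lra)) as [r [Er _]]. exists r. split; auto.
  apply le_epsilon. intros e He. destruct (Hall e He) as [r' [Er' Hr']].
  rewrite Er in Er'. inversion Er'. lra.
Qed.

End Sublevel.

Lemma step_size_bound gamma nA eps c : 0 < gamma -> 0 < nA -> 0 < eps -> eps * nA ^ 2 < gamma ->
  c <= 2 * gamma / nA ^ 2 - eps -> 0 <= c ->
  c * nA ^ 2 / (1 - eps * nA ^ 2 / (4 * gamma)) <= 2 * gamma - eps * nA ^ 2 / 2.
Proof.
  intros Hg Hn He Hen Hc Hc0. set (a := eps * nA ^ 2) in *.
  assert (Hn2 : 0 < nA ^ 2) by (apply pow_lt; lra).
  assert (Ha : 0 < a) by (unfold a; apply Rmult_lt_0_compat; lra).
  assert (Hca : c * nA ^ 2 <= 2 * gamma - a).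
  { apply Rmult_le_compat_r with (r := nA ^ 2) in Hc; [|lra].
    replace ((2 * gamma / nA ^ 2 - eps) * nA ^ 2) with (2 * gamma - a) in Hc by (unfold a; field; lra).
    lra. }
  assert (a / (4 * gamma) < 1 / 4).
  { apply Rmult_lt_reg_r with (4 * gamma); [lra|].
    replace (a / (4 * gamma) * (4 * gamma)) with a by (field; lra). lra. }
  apply Rmult_le_reg_r with (1 - a / (4 * gamma)); [lra|].
  replace (c * nA ^ 2 / (1 - a / (4 * gamma)) * (1 - a / (4 * gamma))) with (c * nA ^ 2)
    by (field; lra).
  replace ((2 * gamma - a / 2) * (1 - a / (4 * gamma))) with (2 * gamma - a + a * a / (8 * gamma))
    by (field; lra).
  assert (0 <= a * a / (8 * gamma)) by (apply Rmult_le_pos; [nra | left; apply Rinv_0_lt_compat; lra]).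
  lra.
Qed.

(* Multiplying the combined optimality inequality by 2c and expanding the multiplier
   update; Y = <r, A ux> is controlled by Young's inequality with weight
   th = 1 - eps |A|^2 / (4 gamma). *)
Lemma lyapunov_real_ineq gamma nA eps c L1 L2 N0 N1 Pr Rr X Y T1 T2 Ux Vx Wx Ex Uz Vz Wz Ez :
  0 < gamma -> 0 < nA -> 0 < eps -> eps * nA ^ 2 < gamma ->
  eps <= c -> c <= 2 * gamma / nA ^ 2 - eps -> 0 <= Rr -> 0 <= X ->
  0 >= Pr + c * Y + T1 + / 2 * (Ux + Wx - Vx) + T2 + / 2 * (Uz + Wz - Vz) + gamma * X ->
  2 * c * Pr = N1 - N0 + c ^ 2 * Rr ->
  (forall th, 0 < th -> Y >= - (th / 2 * Rr + nA ^ 2 / (2 * th) * X)) ->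
  T1 >= - (L1 / 4) * Ex -> T2 >= - (L2 / 4) * Ez ->
  N1 + c * Ux + c * Uz + Rmin (eps ^ 2 * nA ^ 2 / 2) (eps ^ 3 * nA ^ 2 / (4 * gamma)) * (X + Rr)
   + c * (Wx - L1 / 2 * Ex) + c * (Wz - L2 / 2 * Ez) <= N0 + c * Vx + c * Vz.
Proof.
  intros Hg Hn He Hen Hc1 Hc2 HR HX H1 H2 HY HT1 HT2.
  set (th := 1 - eps * nA ^ 2 / (4 * gamma)).
  assert (Hn2 : 0 < nA ^ 2) by (apply pow_lt; lra).
  assert (Hs : 0 < eps * nA ^ 2 / (4 * gamma)) by (apply Rdiv_lt_0_compat; nra).
  assert (Hs2 : eps * nA ^ 2 / (4 * gamma) < 1 / 4).
  { apply Rmult_lt_reg_r with (4 * gamma); [lra|].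
    replace (eps * nA ^ 2 / (4 * gamma) * (4 * gamma)) with (eps * nA ^ 2) by (field; lra). lra. }
  assert (Hth : 0 < th) by (unfold th; lra).
  specialize (HY th Hth).
  pose proof (step_size_bound gamma nA eps c Hg Hn He Hen Hc2 ltac:(lra)) as CB. fold th in CB.
  set (kap := Rmin (eps ^ 2 * nA ^ 2 / 2) (eps ^ 3 * nA ^ 2 / (4 * gamma))).
  set (S1 := Pr + c * Y + T1 + / 2 * (Ux + Wx - Vx) + T2 + / 2 * (Uz + Wz - Vz) + gamma * X).
  assert (K1 : 2 * c * S1 <= 0).
  { assert (2 * c * S1 <= 2 * c * 0) by (apply Rmult_le_compat_l; unfold S1; lra). lra. }
  assert (K2 : c ^ 2 * Y >= c ^ 2 * (- (th / 2 * Rr + nA ^ 2 / (2 * th) * X)))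
    by (apply Rle_ge, Rmult_le_compat_l; [nra | lra]).
  assert (K3 : c * T1 >= c * (- (L1 / 4) * Ex)) by (apply Rle_ge, Rmult_le_compat_l; lra).
  assert (K4 : c * T2 >= c * (- (L2 / 4) * Ez)) by (apply Rle_ge, Rmult_le_compat_l; lra).
  assert (K5 : kap * Rr <= c ^ 2 * (1 - th) * Rr).
  { apply Rmult_le_compat_r; auto. unfold kap. eapply Rle_trans; [apply Rmin_r|].
    unfold th. replace (1 - (1 - eps * nA ^ 2 / (4 * gamma))) with (eps * nA ^ 2 / (4 * gamma)) by ring.
    replace (eps ^ 3 * nA ^ 2 / (4 * gamma)) with (eps ^ 2 * (eps * nA ^ 2 / (4 * gamma))) by (field; lra).
    apply Rmult_le_compat_r; [lra | apply pow_incr; lra]. }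
  assert (K6 : kap * X <= c * (2 * gamma - c * nA ^ 2 / th) * X).
  { apply Rmult_le_compat_r; auto. unfold kap. eapply Rle_trans; [apply Rmin_l|].
    apply Rle_trans with (eps * (eps * nA ^ 2 / 2)); [right; field|].
    apply Rmult_le_compat; [lra | apply Rmult_le_pos; nra | lra | lra]. }
  replace (c ^ 2 * (- (th / 2 * Rr + nA ^ 2 / (2 * th) * X)))
    with (- (c ^ 2 * th / 2 * Rr) - c * (c * nA ^ 2 / th) / 2 * X) in K2 by (field; lra).
  replace (c * (2 * gamma - c * nA ^ 2 / th) * X)
    with (2 * c * gamma * X - c * (c * nA ^ 2 / th) * X) in K6 by ring.
  unfold S1 in K1. nra.
Qed.

Lemma Un_cv_dominated0 (T D : nat -> R) a : 0 < a -> (forall k, 0 <= T k) ->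
  (forall k, a * T k <= D k) -> Un_cv D 0 -> Un_cv T 0.
Proof.
  intros Ha HT HD Hcv. apply (Un_cv_squeeze0 _ (fun k => / a * D k)); [|apply Un_cv_scal0, Hcv].
  intro k. rewrite Rabs_pos_eq by auto. specialize (HD k).
  apply Rmult_le_reg_l with a; auto. rewrite <- Rmult_assoc, Rinv_r; lra.
Qed.

Lemma strong_cv_of_sq {H : Hilbert} (u : nat -> H) l :
  Un_cv (fun k => inner (vsub (u (S k)) l) (vsub (u (S k)) l)) 0 -> strong_cv u l.
Proof.
  intro Hu. apply Un_cv_unshift. apply (Un_cv_sqrt0 _ (fun k => inner_pos _) Hu).
Qed.

Lemma bounded_of_sq_bounded {H : Hilbert} (u : nat -> H) l Cz :
  (forall k, inner (vsub (u k) l) (vsub (u k) l) <= Cz) -> exists Ku, forall k, hnorm (u k) <= Ku.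
Proof.
  intro Hb. exists (sqrt Cz + hnorm l). intro k.
  assert (hnorm (vsub (u k) l) <= sqrt Cz) by (apply sqrt_le_1_alt, Hb).
  pose proof (hnorm_le_sub_add (u k) l). lra.
Qed.

Lemma op_cross_terms_cv0 {T : Hilbert} (Mk : nat -> T -> T) (e u : nat -> T) CM Ku :
  0 <= CM -> (forall j d, hnorm (Mk j d) <= CM * hnorm d) -> (forall j, hnorm (u j) <= Ku) ->
  Un_cv (fun j => hnorm (e j)) 0 ->
  Un_cv (fun j => inner (e j) (Mk j (u j)) + inner (u j) (Mk j (e j))) 0.
Proof.
  intros HC HM Hu He.
  apply (Un_cv_squeeze0 _ (fun j => (2 * CM * Ku) * hnorm (e j))); [|apply Un_cv_scal0, He].
  intro n. eapply Rle_trans; [apply Rabs_triang|].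
  pose proof (cauchy_schwarz (e n) (Mk n (u n))). pose proof (cauchy_schwarz (u n) (Mk n (e n))).
  pose proof (HM n (u n)). pose proof (HM n (e n)). pose proof (Hu n).
  pose proof (hnorm_pos (e n)). pose proof (hnorm_pos (u n)).
  assert (hnorm (e n) * hnorm (Mk n (u n)) <= CM * Ku * hnorm (e n)).
  { apply Rle_trans with (hnorm (e n) * (CM * hnorm (u n))); [apply Rmult_le_compat_l; auto|].
    replace (CM * Ku * hnorm (e n)) with (hnorm (e n) * (CM * Ku)) by ring.
    apply Rmult_le_compat_l, Rmult_le_compat_l; auto. }
  assert (hnorm (u n) * hnorm (Mk n (e n)) <= CM * Ku * hnorm (e n)).
  { apply Rle_trans with (hnorm (u n) * (CM * hnorm (e n))); [apply Rmult_le_compat_l; auto|].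
    replace (CM * Ku * hnorm (e n)) with (Ku * (CM * hnorm (e n))) by ring.
    apply Rmult_le_compat_r; auto. apply Rmult_le_pos; auto. }
  lra.
Qed.

Lemma gradient_diff_cv0 {T : Hilbert} (gh : T -> T) Lg (a1 a2 u : nat -> T) Ku :
  lipschitz Lg gh -> 0 <= Lg -> (forall j, hnorm (u j) <= Ku) ->
  Un_cv (fun j => hnorm (vsub (a1 j) (a2 j))) 0 ->
  Un_cv (fun j => inner (vsub (gh (a1 j)) (gh (a2 j))) (u j)) 0.
Proof.
  intros Hl HL Hu Hd.
  apply (Un_cv_squeeze0 _ (fun j => (Lg * Ku) * hnorm (vsub (a1 j) (a2 j)))); [|apply Un_cv_scal0, Hd].
  intro n. eapply Rle_trans; [apply cauchy_schwarz|].
  pose proof (Hl (a1 n) (a2 n)). pose proof (Hu n). pose proof (hnorm_pos (u n)).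
  pose proof (hnorm_pos (vsub (a1 n) (a2 n))).
  apply Rle_trans with (Lg * hnorm (vsub (a1 n) (a2 n)) * hnorm (u n));
    [apply Rmult_le_compat_r; auto|].
  replace (Lg * Ku * hnorm (vsub (a1 n) (a2 n))) with (Lg * hnorm (vsub (a1 n) (a2 n)) * Ku) by ring.
  apply Rmult_le_compat_l; auto. apply Rmult_le_pos; auto.
Qed.

Lemma antitone_op_weak_null {H : Hilbert} (M : nat -> H -> H) (bs : nat -> H) (sg : nat -> nat) e Kb :
  (forall k, in_Splus (M k)) -> (forall k, loewner_ge (M k) (M (S k))) ->
  strict_incr sg -> weak_cv bs vzero -> (forall j, hnorm (bs j) <= Kb) ->
  Un_cv (fun j => inner (bs j) (M (sg j) e)) 0.
Proof.
  intros HMs HMd Hsg Hw Hb eps0 He0.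
  set (Kb' := Rabs Kb + 1). pose proof (Rabs_pos Kb). pose proof (Rle_abs Kb).
  assert (HKb : 0 < Kb') by (unfold Kb'; lra).
  destruct (op_seq_strong_cauchy M HMs HMd e (eps0 / (2 * Kb'))) as [m Hm];
    [apply Rdiv_lt_0_compat; lra|].
  destruct (Hw (M m e) (eps0 / 2) ltac:(lra)) as [N HN].
  exists (max N m). intros j Hj. unfold Rdist. rewrite Rminus_0_r.
  specialize (HN j ltac:(lia)). rewrite inner_0_l in HN. unfold Rdist in HN. rewrite Rminus_0_r in HN.
  specialize (Hm (sg j) ltac:(pose proof (strict_incr_ge sg Hsg j); lia)).
  set (T := vsub (M m e) (M (sg j) e)) in *.
  replace (inner (bs j) (M (sg j) e)) with (inner (bs j) (M m e) - inner (bs j) T)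
    by (unfold T; autorewrite with inE; ring).
  eapply Rle_lt_trans; [apply Rabs_triang|]. rewrite Rabs_Ropp.
  pose proof (cauchy_schwarz (bs j) T). pose proof (Hb j). pose proof (hnorm_pos T).
  pose proof (hnorm_pos (bs j)).
  assert (hnorm (bs j) * hnorm T <= Kb' * (eps0 / (2 * Kb'))) by (apply Rmult_le_compat; unfold Kb' in *; lra).
  replace (Kb' * (eps0 / (2 * Kb'))) with (eps0 / 2) in * by (field; lra). lra.
Qed.

(** * The proximal AMA iteration *)

Section ProximalAMA.
Context {H G K : Hilbert}.
Variables (f : H -> ER) (g : G -> ER) (h1 : H -> R) (h2 : G -> R) (gh1 : H -> H) (gh2 : G -> G)
  (gamma L1 L2 : R) (A : H -> K) (B : G -> K) (b : K) (nA : R)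
  (M1 : nat -> H -> H) (M2 : nat -> G -> G) (c : nat -> R) (eps : R)
  (x : nat -> H) (z : nat -> G) (p : nat -> K).
Hypothesis Hgam : 0 < gamma.
Hypothesis Hfp : proper f.
Hypothesis Hgp : proper g.
Hypothesis Hfsc : convex_with_modulus gamma f.
Hypothesis Hgc : convex_with_modulus 0 g.
Hypothesis Hh1c : convex_real h1.
Hypothesis Hh1g : frechet_gradient h1 gh1.
Hypothesis Hh1l : lipschitz L1 gh1.
Hypothesis Hh2c : convex_real h2.
Hypothesis Hh2g : frechet_gradient h2 gh2.
Hypothesis Hh2l : lipschitz L2 gh2.
Hypothesis HL1 : 0 <= L1.
Hypothesis HL2 : 0 <= L2.
Hypothesis HA : linear_op A.
Hypothesis HB : linear_op B.
Hypothesis HnA : forall u, hnorm (A u) <= nA * hnorm u.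
Hypothesis HnApos : 0 < nA.
Hypothesis HM1s : forall k, in_Splus (M1 k).
Hypothesis HM1L : forall k, in_Splus (op_minus_id (M1 k) (L1 / 2)).
Hypothesis HM1d : forall k, loewner_ge (M1 k) (M1 (S k)).
Hypothesis HM2s : forall k, in_Splus (M2 k).
Hypothesis HM2L : forall k, in_Splus (op_minus_id (M2 k) (L2 / 2)).
Hypothesis HM2d : forall k, loewner_ge (M2 k) (M2 (S k)).
Hypothesis Heps : 0 < eps.
Hypothesis Heps2 : eps * nA ^ 2 < gamma.
Hypothesis Hc : forall k, c (S k) <= c k /\ eps <= c k <= 2 * gamma / nA ^ 2 - eps.
Hypothesis Hiter : prox_AMA f g gh1 gh2 A B b M1 M2 c x z p.

Section SaddlePoint.
Variables (xs : H) (zs : G) (ps : K).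
Hypothesis Hs : saddle_point f h1 g h2 A B b xs zs ps.

Lemma saddle_point_finite : exists fs gs, f xs = Fin fs /\ g zs = Fin gs.
Proof.
  destruct Hfp as [x0 Hx0]. destruct Hgp as [z0 Hz0].
  destruct (Hs x0 z0 ps) as [_ Hle]. unfold Lagr in Hle.
  destruct (f x0) as [a0|]; [|congruence]. destruct (g z0) as [b0|]; [|congruence].
  destruct (f xs) as [fs|]; destruct (g zs) as [gs|]; simpl in Hle; try contradiction.
  eauto.
Qed.

(* Maximality in p at p = ps + residual forces the residual to vanish. *)
Lemma saddle_point_feasible : b = vadd (A xs) (B zs).
Proof.
  destruct saddle_point_finite as [fs [gs [E1 E2]]].
  set (r := vsub (vsub b (A xs)) (B zs)).
  destruct (Hs xs zs (vadd ps r)) as [Hle _]. unfold Lagr in Hle. rewrite E1, E2 in Hle.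
  simpl in Hle. fold r in Hle. rewrite inner_add_l in Hle.
  assert (Hr : r = vzero) by (apply inner_def; pose proof (inner_pos r); lra).
  apply vsub_eq0. rewrite <- Hr. unfold r. vext.
Qed.

Lemma saddle_point_x_ineq : exists fs, f xs = Fin fs /\ forall w a, ERle (f w) (Fin a) ->
  a >= fs + inner ps (A (vsub w xs)) - inner (gh1 xs) (vsub w xs)
        + gamma / 2 * inner (vsub w xs) (vsub w xs).
Proof.
  destruct saddle_point_finite as [fs [gs [E1 E2]]]. exists fs. split; auto.
  intros w a Hw.
  set (c1 := fun u => - inner ps (A u)).
  set (Q := fun u => h1 u + c1 u).
  assert (Hmin : forall u, ERle (ERaddR (f xs) (Q xs)) (ERaddR (f u) (Q u))).
  { intro u. destruct (Hs u zs ps) as [_ Hle]. unfold Lagr in Hle. rewrite E2 in Hle.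
    change (ERaddR (Fin gs) (h2 zs)) with (Fin (gs + h2 zs)) in Hle.
    rewrite !ERadd_finr, !ERaddR_assoc in Hle.
    apply (ERle_addR_inv _ _ (gs + h2 zs + inner ps b - inner ps (B zs))).
    rewrite !ERaddR_assoc.
    replace (Q xs + (gs + h2 zs + inner ps b - inner ps (B zs))) with
       (h1 xs + (gs + h2 zs) + inner ps (vsub (vsub b (A xs)) (B zs)))
      by (unfold Q, c1; autorewrite with inE; ring).
    replace (Q u + (gs + h2 zs + inner ps b - inner ps (B zs))) with
       (h1 u + (gs + h2 zs) + inner ps (vsub (vsub b (A u)) (B zs)))
      by (unfold Q, c1; autorewrite with inE; ring).
    exact Hle. }
  assert (Hlin : forall d t, c1 (vadd xs (vscal t d)) = c1 xs + t * c1 d).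
  { intros d t. unfold c1. rewrite (lin_add A HA), (lin_scal A HA). autorewrite with inE. ring. }
  pose proof (argmin_variational_ineq f Q gamma xs fs (fun d => inner (gh1 xs) d + c1 d)
    ltac:(lra) E1 Hfsc Hmin (differentiable_directional_bound h1 gh1 c1 xs Hh1g Hlin) w a Hw) as V.
  unfold c1 in V. lra.
Qed.

Lemma saddle_point_z_ineq : exists gs, g zs = Fin gs /\ forall v a, ERle (g v) (Fin a) ->
  a >= gs + inner ps (B (vsub v zs)) - inner (gh2 zs) (vsub v zs).
Proof.
  destruct saddle_point_finite as [fs [gs [E1 E2]]]. exists gs. split; auto.
  intros v a Hv.
  set (c2 := fun u => - inner ps (B u)).
  set (Q := fun u => h2 u + c2 u).
  assert (Hmin : forall u, ERle (ERaddR (g zs) (Q zs)) (ERaddR (g u) (Q u))).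
  { intro u. destruct (Hs xs u ps) as [_ Hle]. unfold Lagr in Hle. rewrite E1 in Hle.
    change (ERaddR (Fin fs) (h1 xs)) with (Fin (fs + h1 xs)) in Hle.
    rewrite !ERadd_finl, !ERaddR_assoc in Hle.
    apply (ERle_addR_inv _ _ (fs + h1 xs + inner ps b - inner ps (A xs))).
    rewrite !ERaddR_assoc.
    replace (Q zs + (fs + h1 xs + inner ps b - inner ps (A xs))) with
       (fs + h1 xs + h2 zs + inner ps (vsub (vsub b (A xs)) (B zs)))
      by (unfold Q, c2; autorewrite with inE; ring).
    replace (Q u + (fs + h1 xs + inner ps b - inner ps (A xs))) with
       (fs + h1 xs + h2 u + inner ps (vsub (vsub b (A xs)) (B u)))
      by (unfold Q, c2; autorewrite with inE; ring).
    exact Hle. }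
  assert (Hlin : forall d t, c2 (vadd zs (vscal t d)) = c2 zs + t * c2 d).
  { intros d t. unfold c2. rewrite (lin_add B HB), (lin_scal B HB). autorewrite with inE. ring. }
  pose proof (argmin_variational_ineq g Q 0 zs gs (fun d => inner (gh2 zs) d + c2 d)
    (Rle_refl 0) E2 Hgc Hmin (differentiable_directional_bound h2 gh2 c2 zs Hh2g Hlin) v a Hv) as V.
  unfold c2 in V. pose proof (inner_pos (vsub v zs)). lra.
Qed.

End SaddlePoint.

Lemma iterate_x_ineq k : exists fx1, f (x (S k)) = Fin fx1 /\ forall w a, ERle (f w) (Fin a) ->
  a >= fx1 + inner (p k) (A (vsub w (x (S k)))) - inner (gh1 (x k)) (vsub w (x (S k)))
     - / 2 * (inner (vsub (x (S k)) (x k)) (M1 k (vsub w (x (S k))))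
              + inner (vsub w (x (S k))) (M1 k (vsub (x (S k)) (x k))))
     + gamma / 2 * inner (vsub w (x (S k))) (vsub w (x (S k))).
Proof.
  destruct (Hiter k) as [Hx _].
  pose proof (in_Splus_linear _ (HM1s k)) as HM.
  set (Q := fun u => - inner (p k) (A u) + inner (vsub u (x k)) (gh1 (x k))
               + / 2 * Mnorm2 (M1 k) (vsub u (x k))).
  change (forall u, ERle (ERaddR (f (x (S k))) (Q (x (S k)))) (ERaddR (f u) (Q u))) in Hx.
  destruct (argmin_finite f Q _ Hfp Hx) as [fx1 E]. exists fx1. split; auto.
  set (e := vsub (x (S k)) (x k)).
  set (l := fun d => - inner (p k) (A d) + inner d (gh1 (x k))
              + / 2 * (inner e (M1 k d) + inner d (M1 k e))).
  set (q := fun d => / 2 * inner d (M1 k d)).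
  assert (HQ : forall d t, Q (vadd (x (S k)) (vscal t d)) = Q (x (S k)) + t * l d + t ^ 2 * q d).
  { intros d t. unfold Q, l, q, Mnorm2.
    replace (vsub (vadd (x (S k)) (vscal t d)) (x k)) with (vadd e (vscal t d)) by (unfold e; vext).
    fold e. rewrite (lin_add _ HM), (lin_scal _ HM), (lin_add _ HA), (lin_scal _ HA).
    unfold e. autorewrite with inE. ring. }
  intros w a Hw.
  pose proof (argmin_variational_ineq f Q gamma (x (S k)) fx1 l ltac:(lra) E Hfsc Hx
                (quadratic_directional_bound Q _ l q HQ) w a Hw) as V.
  unfold l in V. rewrite (inner_sym (vsub w (x (S k))) (gh1 (x k))) in V. fold e. lra.
Qed.

Lemma iterate_z_ineq k : exists gz1, g (z (S k)) = Fin gz1 /\ forall v a, ERle (g v) (Fin a) ->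
  a >= gz1 + inner (p (S k)) (B (vsub v (z (S k)))) - inner (gh2 (z k)) (vsub v (z (S k)))
     - / 2 * (inner (vsub (z (S k)) (z k)) (M2 k (vsub v (z (S k))))
              + inner (vsub v (z (S k))) (M2 k (vsub (z (S k)) (z k)))).
Proof.
  destruct (Hiter k) as [_ [Hz Hp]].
  pose proof (in_Splus_linear _ (HM2s k)) as HM.
  set (Q := fun v => - inner (p k) (B v)
               + c k / 2 * (hnorm (vsub (vadd (A (x (S k))) (B v)) b)) ^ 2
               + inner (vsub v (z k)) (gh2 (z k))
               + / 2 * Mnorm2 (M2 k) (vsub v (z k))).
  change (forall u, ERle (ERaddR (g (z (S k))) (Q (z (S k)))) (ERaddR (g u) (Q u))) in Hz.
  destruct (argmin_finite g Q _ Hgp Hz) as [gz1 E]. exists gz1. split; auto.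
  set (e := vsub (z (S k)) (z k)).
  set (r := vsub (vadd (A (x (S k))) (B (z (S k)))) b).
  set (l := fun d => - inner (p k) (B d) + c k * inner r (B d) + inner d (gh2 (z k))
              + / 2 * (inner e (M2 k d) + inner d (M2 k e))).
  set (q := fun d => c k / 2 * inner (B d) (B d) + / 2 * inner d (M2 k d)).
  assert (HQ : forall d t, Q (vadd (z (S k)) (vscal t d)) = Q (z (S k)) + t * l d + t ^ 2 * q d).
  { intros d t. unfold Q, l, q, Mnorm2. rewrite !hnorm_pow2.
    replace (vsub (vadd (z (S k)) (vscal t d)) (z k)) with (vadd e (vscal t d)) by (unfold e; vext).
    replace (vsub (vadd (A (x (S k))) (B (vadd (z (S k)) (vscal t d)))) b) with
       (vadd r (vscal t (B d))) by (unfold r; rewrite (lin_add _ HB), (lin_scal _ HB); vext).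
    fold e r. rewrite (lin_add _ HM), (lin_scal _ HM), (lin_add _ HB), (lin_scal _ HB).
    unfold e, r. autorewrite with inE.
    rewrite (inner_sym (B d) (A (x (S k)))), (inner_sym (B d) (B (z (S k)))), (inner_sym (B d) b).
    field. }
  intros v a Hv.
  pose proof (argmin_variational_ineq g Q 0 (z (S k)) gz1 l (Rle_refl 0) E Hgc Hz
                (quadratic_directional_bound Q _ l q HQ) v a Hv) as V.
  unfold l in V. rewrite (inner_sym (vsub v (z (S k))) (gh2 (z k))) in V. fold e.
  (* the multiplier update turns p k - c k r into p (S k) *)
  rewrite Hp. unfold r in V. autorewrite with inE in *.
  pose proof (inner_pos (vsub v (z (S k)))). autorewrite with inE in *.
  replace (0 / 2) with 0 in V by field. lra.
Qed.

(** ** Lyapunov decrease *)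

Definition kappa := Rmin (eps ^ 2 * nA ^ 2 / 2) (eps ^ 3 * nA ^ 2 / (4 * gamma)).

Lemma kappa_pos : 0 < kappa.
Proof.
  assert (0 < nA ^ 2) by (apply pow_lt; lra).
  unfold kappa. apply Rmin_glb_lt; apply Rdiv_lt_0_compat;
    try apply Rmult_lt_0_compat; try apply pow_lt; lra.
Qed.

Definition residual k := vsub (vsub b (A (x k))) (B (z k)).

Definition lyapunov (xs : H) (zs : G) (ps : K) k := inner (vsub (p k) ps) (vsub (p k) ps)
  + c k * Mnorm2 (M1 k) (vsub (x k) xs) + c k * Mnorm2 (M2 k) (vsub (z k) zs).

Section Decrease.
Variables (xs : H) (zs : G) (ps : K).
Hypothesis Hs : saddle_point f h1 g h2 A B b xs zs ps.

(* Sum of the four first-order conditions: those of the subproblems tested at (xs, zs) and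
   those of the saddle point tested at (x (S k), z (S k)). *)
Lemma iterate_saddle_ineq k :
  let ux := vsub (x (S k)) xs in let vx := vsub (x k) xs in let ex := vsub (x (S k)) (x k) in
  let uz := vsub (z (S k)) zs in let vz := vsub (z k) zs in let ez := vsub (z (S k)) (z k) in
  0 >= inner (vsub (p (S k)) ps) (residual (S k)) + c k * inner (residual (S k)) (A ux)
     + inner (vsub (gh1 (x k)) (gh1 xs)) ux
     + / 2 * (inner ux (M1 k ux) + inner ex (M1 k ex) - inner vx (M1 k vx))
     + inner (vsub (gh2 (z k)) (gh2 zs)) uz
     + / 2 * (inner uz (M2 k uz) + inner ez (M2 k ez) - inner vz (M2 k vz)) + gamma * inner ux ux.
Proof.
  intros ux vx ex uz vz ez.
  pose proof (in_Splus_linear _ (HM1s k)) as HM1l.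
  pose proof (in_Splus_linear _ (HM2s k)) as HM2l.
  destruct (iterate_x_ineq k) as [fx1 [Ex1 VIx]].
  destruct (iterate_z_ineq k) as [gz1 [Ez1 VIz]].
  destruct (saddle_point_x_ineq xs zs ps Hs) as [fs [Efs Sx]].
  destruct (saddle_point_z_ineq xs zs ps Hs) as [gs [Egs Sz]].
  destruct (Hiter k) as [_ [_ Hp1]].
  assert (Er : residual (S k) = vopp (vadd (A ux) (B uz))).
  { unfold residual, ux, uz. rewrite (saddle_point_feasible xs zs ps Hs), (lin_sub _ HA), (lin_sub _ HB).
    vext. }
  specialize (VIx xs fs ltac:(rewrite Efs; simpl; lra)).
  specialize (Sx (x (S k)) fx1 ltac:(rewrite Ex1; simpl; lra)).
  specialize (VIz zs gs ltac:(rewrite Egs; simpl; lra)).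
  specialize (Sz (z (S k)) gz1 ltac:(rewrite Ez1; simpl; lra)).
  replace (vsub xs (x (S k))) with (vopp ux) in VIx by (unfold ux; vext).
  replace (vsub zs (z (S k))) with (vopp uz) in VIz by (unfold uz; vext).
  fold ux in Sx. fold uz in Sz. fold ex in VIx. fold ez in VIz.
  replace ex with (vsub ux vx) in * by (unfold ex, ux, vx; vext).
  replace ez with (vsub uz vz) in * by (unfold ez, uz, vz; vext).
  rewrite (lin_opp _ HA), (lin_opp _ HM1l), (lin_sub _ HM1l) in *.
  rewrite (lin_opp _ HB), (lin_opp _ HM2l), (lin_sub _ HM2l) in *.
  fold (residual (S k)) in Hp1. rewrite Hp1 in VIz |- *. rewrite Er in VIz |- *.
  autorewrite with inE in *.
  try rewrite (inner_sym (B uz) (A ux)) in *; try rewrite (inner_sym ps (p k)) in *;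
  try rewrite (inner_sym (A ux) (p k)) in *; try rewrite (inner_sym (B uz) (p k)) in *;
  try rewrite (inner_sym (A ux) ps) in *; try rewrite (inner_sym (B uz) ps) in *.
  lra.
Qed.

Lemma lyapunov_decrease k :
  lyapunov xs zs ps (S k)
  + kappa * (inner (vsub (x (S k)) xs) (vsub (x (S k)) xs) + inner (residual (S k)) (residual (S k)))
  + c k * Mnorm2 (op_minus_id (M1 k) (L1 / 2)) (vsub (x (S k)) (x k))
  + c k * Mnorm2 (op_minus_id (M2 k) (L2 / 2)) (vsub (z (S k)) (z k)) <= lyapunov xs zs ps k.
Proof.
  pose proof (iterate_saddle_ineq k) as Hmain. simpl in Hmain.
  destruct (Hiter k) as [_ [_ Hp1]]. fold (residual (S k)) in Hp1.
  set (ux := vsub (x (S k)) xs) in *. set (vx := vsub (x k) xs) in *.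
  set (ex := vsub (x (S k)) (x k)) in *.
  set (uz := vsub (z (S k)) zs) in *. set (vz := vsub (z k) zs) in *.
  set (ez := vsub (z (S k)) (z k)) in *.
  set (r := residual (S k)) in *.
  destruct (Hc k) as [Hck1 [Hck2 Hck3]].
  pose proof (lyapunov_real_ineq gamma nA eps (c k) L1 L2
    (inner (vsub (p k) ps) (vsub (p k) ps)) (inner (vsub (p (S k)) ps) (vsub (p (S k)) ps))
    (inner (vsub (p (S k)) ps) r) (inner r r) (inner ux ux) (inner r (A ux))
    (inner (vsub (gh1 (x k)) (gh1 xs)) ux) (inner (vsub (gh2 (z k)) (gh2 zs)) uz)
    (inner ux (M1 k ux)) (inner vx (M1 k vx)) (inner ex (M1 k ex)) (inner ex ex)
    (inner uz (M2 k uz)) (inner vz (M2 k vz)) (inner ez (M2 k ez)) (inner ez ez)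
    Hgam HnApos Heps Heps2 Hck2 Hck3 (inner_pos r) (inner_pos ux) Hmain) as CF.
  assert (H2 : 2 * c k * inner (vsub (p (S k)) ps) r = inner (vsub (p (S k)) ps) (vsub (p (S k)) ps)
             - inner (vsub (p k) ps) (vsub (p k) ps) + c k ^ 2 * inner r r).
  { rewrite Hp1. autorewrite with inE. rewrite (inner_sym r (p k)), (inner_sym r ps), (inner_sym ps (p k)). ring. }
  specialize (CF H2 (fun th Hth => young_bounded_op A nA r ux th HnA Hth)).
  specialize (CF (gradient_three_point h1 gh1 Hh1g Hh1c L1 HL1 Hh1l (x k) (x (S k)) xs)).
  specialize (CF (gradient_three_point h2 gh2 Hh2g Hh2c L2 HL2 Hh2l (z k) (z (S k)) zs)).
  assert (0 <= c (S k)) by (destruct (Hc (S k)) as [_ [? _]]; lra).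
  assert (Hm1 : c (S k) * Mnorm2 (M1 (S k)) ux <= c k * inner ux (M1 k ux)).
  { apply Rmult_le_compat; [lra | apply in_Splus_Mnorm2_pos; auto | lra | apply Rge_le, HM1d]. }
  assert (Hm2 : c (S k) * Mnorm2 (M2 (S k)) uz <= c k * inner uz (M2 k uz)).
  { apply Rmult_le_compat; [lra | apply in_Splus_Mnorm2_pos; auto | lra | apply Rge_le, HM2d]. }
  unfold lyapunov, kappa, op_minus_id. unfold Mnorm2 at 3 4 5 6.
  fold ux vx uz vz ex ez.
  autorewrite with inE in CF |- *. lra.
Qed.

End Decrease.

Lemma step_pos k : 0 < c k.
Proof. destruct (Hc k) as [_ [? _]]. lra. Qed.
Lemma step_ub k : c k <= 2 * gamma / nA ^ 2.
Proof. destruct (Hc k) as [_ [_ ?]]. lra. Qed.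

Section Consequences.
Variables (xs : H) (zs : G) (ps : K).
Hypothesis Hs : saddle_point f h1 g h2 A B b xs zs ps.

Let gap k := lyapunov xs zs ps k - lyapunov xs zs ps (S k).

Lemma lyapunov_pos k : 0 <= lyapunov xs zs ps k.
Proof.
  unfold lyapunov. pose proof (inner_pos (vsub (p k) ps)). pose proof (step_pos k).
  pose proof (in_Splus_Mnorm2_pos _ (vsub (x k) xs) (HM1s k)).
  pose proof (in_Splus_Mnorm2_pos _ (vsub (z k) zs) (HM2s k)). nra.
Qed.

Lemma lyapunov_gap_ge k :
  kappa * inner (vsub (x (S k)) xs) (vsub (x (S k)) xs) <= gap k /\
  kappa * inner (residual (S k)) (residual (S k)) <= gap k /\
  eps * Mnorm2 (op_minus_id (M2 k) (L2 / 2)) (vsub (z (S k)) (z k)) <= gap k.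
Proof.
  pose proof (lyapunov_decrease xs zs ps Hs k). pose proof kappa_pos.
  pose proof (inner_pos (vsub (x (S k)) xs)). pose proof (inner_pos (residual (S k))).
  destruct (Hc k) as [_ [? _]].
  pose proof (in_Splus_Mnorm2_pos _ (vsub (x (S k)) (x k)) (HM1L k)).
  pose proof (in_Splus_Mnorm2_pos _ (vsub (z (S k)) (z k)) (HM2L k)).
  unfold gap. repeat split; nra.
Qed.

Lemma lyapunov_cv : (exists l, Un_cv (lyapunov xs zs ps) l) /\ Un_cv gap 0.
Proof.
  apply Un_cv_telescoping_decrease; [apply lyapunov_pos| |].
  - intro k. destruct (lyapunov_gap_ge k) as [? _]. pose proof kappa_pos.
    pose proof (inner_pos (vsub (x (S k)) xs)). nra.
  - intro k. unfold gap. lra.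
Qed.

Lemma x_strong_cv : strong_cv x xs.
Proof.
  apply strong_cv_of_sq, (Un_cv_dominated0 _ gap kappa kappa_pos); [intro; apply inner_pos | | apply lyapunov_cv].
  intro k. apply lyapunov_gap_ge.
Qed.

Lemma residual_cv0 : Un_cv (fun k => hnorm (residual k)) 0.
Proof.
  apply (Un_cv_ext (fun k => hnorm (vsub (residual k) vzero))); [intro k; f_equal; vext|].
  apply strong_cv_of_sq.
  apply (Un_cv_ext (fun k => inner (residual (S k)) (residual (S k)))); [intro k; f_equal; vext|].
  apply (Un_cv_dominated0 _ gap kappa kappa_pos); [intro; apply inner_pos | | apply lyapunov_cv].
  intro k. apply lyapunov_gap_ge.
Qed.

Lemma z_steps_Mnorm2_cv0 :
  Un_cv (fun k => Mnorm2 (op_minus_id (M2 k) (L2 / 2)) (vsub (z (S k)) (z k))) 0.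
Proof.
  apply (Un_cv_dominated0 _ gap eps Heps); [intro; apply in_Splus_Mnorm2_pos; auto | | apply lyapunov_cv].
  intro k. apply lyapunov_gap_ge.
Qed.

Lemma lyapunov_le_0 k : lyapunov xs zs ps k <= lyapunov xs zs ps 0%nat.
Proof.
  induction k as [|k IH]; [lra|].
  pose proof (lyapunov_decrease xs zs ps Hs k). pose proof kappa_pos.
  pose proof (inner_pos (vsub (x (S k)) xs)). pose proof (inner_pos (residual (S k))).
  pose proof (step_pos k).
  pose proof (in_Splus_Mnorm2_pos _ (vsub (x (S k)) (x k)) (HM1L k)).
  pose proof (in_Splus_Mnorm2_pos _ (vsub (z (S k)) (z k)) (HM2L k)). nra.
Qed.

Lemma p_bounded : exists Kp, forall k, hnorm (p k) <= Kp.
Proof.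
  apply (bounded_of_sq_bounded p ps (lyapunov xs zs ps 0%nat)). intro k.
  pose proof (lyapunov_le_0 k). unfold lyapunov in *.
  pose proof (step_pos k). pose proof (in_Splus_Mnorm2_pos _ (vsub (x k) xs) (HM1s k)).
  pose proof (in_Splus_Mnorm2_pos _ (vsub (z k) zs) (HM2s k)). nra.
Qed.

End Consequences.

(** ** Weak cluster points *)

Hypothesis Hflsc : lsc f.
Hypothesis Hglsc : lsc g.
Hypothesis Hfc : convex_with_modulus 0 f.
Variable CB : R.
Hypothesis HBbd : forall v, hnorm (B v) <= CB * hnorm v.
Hypothesis Hcase : (exists alpha, 0 < alpha /\
              forall k, in_Palpha alpha (op_minus_id (M2 k) (L2 / 2)))
        \/ (exists Bs : K -> G, is_adjoint B Bs /\
              exists beta, 0 < beta /\ in_Palpha beta (fun v => Bs (B v))).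

Section Limit.
Variables (xs0 : H) (zs0 : G) (ps0 : K).
Hypothesis Hs0 : saddle_point f h1 g h2 A B b xs0 zs0 ps0.

Lemma Bz_strong_cv : strong_cv (fun k => B (z k)) (vsub b (A xs0)).
Proof.
  apply (Un_cv_squeeze0 _ (fun k => hnorm (residual k) + nA * hnorm (vsub (x k) xs0))).
  - intro n. rewrite Rabs_pos_eq by apply hnorm_pos.
    replace (vsub (B (z n)) (vsub b (A xs0))) with (vadd (vopp (residual n)) (vopp (A (vsub (x n) xs0))))
      by (unfold residual; rewrite (lin_sub _ HA); vext).
    eapply Rle_trans; [apply hnorm_triangle|]. rewrite !hnorm_opp. specialize (HnA (vsub (x n) xs0)). lra.
  - replace 0 with (0 + 0) by ring. apply CV_plus; [apply (residual_cv0 xs0 zs0 ps0 Hs0)|].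
    apply Un_cv_scal0, (x_strong_cv xs0 zs0 ps0 Hs0).
Qed.

Lemma p_steps_cv0 : Un_cv (fun k => hnorm (vsub (p (S k)) (p k))) 0.
Proof.
  apply (Un_cv_squeeze0 _ (fun k => 2 * gamma / nA ^ 2 * hnorm (residual (S k)))).
  - intro n. rewrite Rabs_pos_eq by apply hnorm_pos. destruct (Hiter n) as [_ [_ Hp]].
    rewrite Hp. replace (vsub (vadd (p n) (vscal (c n) (vsub (vsub b (A (x (S n)))) (B (z (S n)))))) (p n))
      with (vscal (c n) (residual (S n))) by (unfold residual; vext).
    rewrite hnorm_scal, Rabs_pos_eq by (left; apply step_pos).
    apply Rmult_le_compat_r; [apply hnorm_pos | apply step_ub].
  - apply Un_cv_scal0. apply (Un_cv_shift (fun k => hnorm (residual k))), (residual_cv0 xs0 zs0 ps0 Hs0).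
Qed.

Lemma z_steps_cv0 : Un_cv (fun k => hnorm (vsub (z (S k)) (z k))) 0.
Proof.
  apply (Un_cv_sqrt0 (fun k => inner (vsub (z (S k)) (z k)) (vsub (z (S k)) (z k)))
           (fun k => inner_pos _)).
  destruct Hcase as [[al [Hal HP]] | [Bs [Had [be [Hbe HP]]]]].
  - apply (Un_cv_dominated0 _ _ al Hal (fun k => inner_pos _)
             (fun k => in_Palpha_lower _ _ _ (HP k)) (z_steps_Mnorm2_cv0 xs0 zs0 ps0 Hs0)).
  - apply (Un_cv_dominated0 _ (fun k => hnorm (vsub (B (z (S k))) (B (z k))) * hnorm (vsub (B (z (S k))) (B (z k)))) be Hbe
             (fun k => inner_pos _)).
    + intro k. rewrite hnorm_mul_self, <- (lin_sub _ HB). apply (adjoint_Palpha_lower B Bs); auto.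
    + replace 0 with (0 * 0) by ring. apply CV_mult; apply (strong_cv_steps0 _ _ Bz_strong_cv).
Qed.

Lemma z_bounded : exists Kz, forall k, hnorm (z k) <= Kz.
Proof.
  destruct Hcase as [[al [Hal HP]] | [Bs [Had [be [Hbe HP]]]]].
  - apply (bounded_of_sq_bounded z zs0 (lyapunov xs0 zs0 ps0 0%nat / (al * eps))). intro k.
    set (y := vsub (z k) zs0).
    pose proof (lyapunov_le_0 xs0 zs0 ps0 Hs0 k) as HV. unfold lyapunov in HV. fold y in HV.
    destruct (Hc k) as [_ [? _]]. pose proof (step_pos k).
    pose proof (in_Splus_Mnorm2_pos _ (vsub (x k) xs0) (HM1s k)).
    pose proof (inner_pos (vsub (p k) ps0)). pose proof (inner_pos y).
    pose proof (in_Palpha_shift_lower (M2 k) al (L2 / 2) y ltac:(lra) (HP k)).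
    assert (eps * (al * inner y y) <= c k * Mnorm2 (M2 k) y)
      by (apply Rmult_le_compat; try lra; apply Rmult_le_pos; lra).
    apply Rmult_le_reg_r with (al * eps); [apply Rmult_lt_0_compat; lra|].
    replace (lyapunov xs0 zs0 ps0 0 / (al * eps) * (al * eps)) with (lyapunov xs0 zs0 ps0 0)
      by (field; lra).
    unfold lyapunov. nra.
  - destruct (strong_cv_bounded _ _ Bz_strong_cv) as [KB HKB].
    apply (bounded_of_sq_bounded z zs0 ((KB + hnorm (B zs0)) ^ 2 / be)). intro k.
    pose proof (adjoint_Palpha_lower B Bs be (vsub (z k) zs0) Had HP) as HBb.
    rewrite (lin_sub _ HB), <- (hnorm_pow2 (vsub (B (z k)) (B zs0))) in HBb.
    pose proof (hnorm_sub_le (B (z k)) (B zs0)). pose proof (HKB k).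
    pose proof (hnorm_pos (vsub (B (z k)) (B zs0))).
    assert (hnorm (vsub (B (z k)) (B zs0)) ^ 2 <= (KB + hnorm (B zs0)) ^ 2)
      by (apply pow_incr; lra).
    apply Rmult_le_reg_l with be; [lra|].
    replace (be * ((KB + hnorm (B zs0)) ^ 2 / be)) with ((KB + hnorm (B zs0)) ^ 2) by (field; lra).
    lra.
Qed.

Lemma vanishing_direction_trivial e : Un_cv (fun k => c k * Mnorm2 (M2 k) e) 0 -> B e = vzero -> e = vzero.
Proof.
  intros HQ HBe. apply inner_def. pose proof (inner_pos e).
  destruct Hcase as [[al [Hal HP]] | [Bs [Had [be [Hbe HP]]]]].
  - assert (Hle : eps * (al * inner e e) <= 0).
    { apply (Un_cv_ge_eventually _ _ _ 0 HQ). intros k _.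
      pose proof (in_Palpha_shift_lower (M2 k) al (L2 / 2) e ltac:(lra) (HP k)).
      apply Rmult_le_compat; try lra; [apply Rmult_le_pos; lra | destruct (Hc k); lra]. }
    assert (al * inner e e <= 0)
      by (apply Rmult_le_reg_l with eps; [lra | rewrite Rmult_0_r; lra]).
    apply Rle_antisym; [apply Rmult_le_reg_l with al; [lra | rewrite Rmult_0_r; lra] | auto].
  - pose proof (adjoint_Palpha_lower B Bs be e Had HP) as Hl.
    rewrite HBe, inner_0_l in Hl. nra.
Qed.

Section ClusterPoint.
Variables (sg : nat -> nat) (zb : G) (pb : K).
Hypothesis Hsg : strict_incr sg.
Hypothesis Hzw : weak_cv (fun j => z (sg j)) zb.
Hypothesis Hpw : weak_cv (fun j => p (sg j)) pb.

Lemma strict_incr_succ : strict_incr (fun j => S (sg j)).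
Proof. intro n. specialize (Hsg n). lia. Qed.

Lemma z_succ_weak_cv : weak_cv (fun j => z (S (sg j))) zb.
Proof.
  apply (weak_cv_perturb (fun j => z (sg j))); auto.
  apply (Un_cv_subseq (fun k => hnorm (vsub (z (S k)) (z k))) 0 sg Hsg), z_steps_cv0.
Qed.

Lemma p_succ_weak_cv : weak_cv (fun j => p (S (sg j))) pb.
Proof.
  apply (weak_cv_perturb (fun j => p (sg j))); auto.
  apply (Un_cv_subseq (fun k => hnorm (vsub (p (S k)) (p k))) 0 sg Hsg), p_steps_cv0.
Qed.

Lemma x_succ_strong_cv : strong_cv (fun j => x (S (sg j))) xs0.
Proof. apply (Un_cv_subseq (fun n => hnorm (vsub (x n) xs0)) 0 _ strict_incr_succ), (x_strong_cv xs0 zs0 ps0 Hs0). Qed.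

Lemma Bz_succ_strong_cv : strong_cv (fun j => B (z (S (sg j)))) (vsub b (A xs0)).
Proof. apply (Un_cv_subseq (fun n => hnorm (vsub (B (z n)) (vsub b (A xs0)))) 0 _ strict_incr_succ), Bz_strong_cv. Qed.

Lemma z_steps_subseq_cv0 : Un_cv (fun j => hnorm (vsub (z (S (sg j))) (z (sg j)))) 0.
Proof. apply (Un_cv_subseq (fun k => hnorm (vsub (z (S k)) (z k))) 0 sg Hsg), z_steps_cv0. Qed.

Lemma x_steps_subseq_cv0 : Un_cv (fun j => hnorm (vsub (x (S (sg j))) (x (sg j)))) 0.
Proof.
  apply (Un_cv_subseq (fun k => hnorm (vsub (x (S k)) (x k))) 0 sg Hsg).
  apply (strong_cv_steps0 _ xs0), (x_strong_cv xs0 zs0 ps0 Hs0).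
Qed.

(* {v | |B v - (b - A xs0)| <= eta} is closed and convex, and contains z (S (sg j)) eventually. *)
Lemma cluster_feasible : B zb = vsub b (A xs0).
Proof.
  set (y := vsub b (A xs0)).
  assert (HCB : forall v w, hnorm (vsub (B v) (B w)) <= Rabs CB * hnorm (vsub v w)).
  { intros v w. rewrite <- (lin_sub _ HB). eapply Rle_trans; [apply HBbd|].
    apply Rmult_le_compat_r; [apply hnorm_pos | apply Rle_abs]. }
  assert (Hall : forall eta, 0 < eta -> hnorm (vsub (B zb) y) <= eta).
  { intros eta Heta. destruct (Bz_succ_strong_cv eta Heta) as [N HN].
    apply (weak_limit_closed_convex (fun v => hnorm (vsub (B v) y) <= eta) (fun j => z (S (sg j))) zb N);
      [| | | apply z_succ_weak_cv].
    - intros l Hl. apply le_epsilon_scaled with (c := Rabs CB + 1); [pose proof (Rabs_pos CB); lra|].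
      intros e He. destruct (Hl e He) as [v [Hv Nv]].
      pose proof (hnorm_sub_triangle (B l) (B v) y). rewrite hnorm_sub_sym in Nv.
      pose proof (HCB l v). pose proof (Rabs_pos CB). pose proof (hnorm_pos (vsub l v)). nra.
    - intros a1 a2 t Ha1 Ha2 Ht.
      replace (vsub (B (vadd (vscal t a1) (vscal (1 - t) a2))) y) with
        (vadd (vscal t (vsub (B a1) y)) (vscal (1 - t) (vsub (B a2) y)))
        by (rewrite (lin_add _ HB), !(lin_scal _ HB); vext).
      eapply Rle_trans; [apply hnorm_triangle|]. rewrite !hnorm_scal, !Rabs_pos_eq by lra. nra.
    - intros n Hn. specialize (HN n Hn). unfold Rdist in HN. fold y in HN.
      rewrite Rminus_0_r, Rabs_pos_eq in HN by apply hnorm_pos. lra. }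
  apply vsub_eq0, hnorm_eq0. pose proof (hnorm_pos (vsub (B zb) y)).
  assert (hnorm (vsub (B zb) y) <= 0) by (apply le_epsilon; intros; rewrite Rplus_0_l; apply Hall; auto).
  lra.
Qed.

(* Passing to the limit in the optimality condition of the z-subproblem: g + h2 at zb is
   below the limit of the right-hand sides, by weak closedness of the sublevel sets. *)
Lemma cluster_z_ineq v a : ERle (g v) (Fin a) ->
  exists gb, g zb = Fin gb /\ gb + h2 zb <= a + h2 v - inner pb (B v) + inner pb (vsub b (A xs0)).
Proof.
  intro Hv. set (y := vsub b (A xs0)).
  destruct (op_seq_uniform_bound M2 HM2s HM2d) as [CM [HCM HCMb]].
  destruct z_bounded as [Kz HKz]. destruct (p_bounded xs0 zs0 ps0 Hs0) as [Kp HKp].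
  set (zj := fun j => z (S (sg j))).
  set (Rr := fun j => (a + h2 v) - inner (p (S (sg j))) (B v) + inner (p (S (sg j))) (B (zj j))
     - inner (vsub (gh2 (zj j)) (gh2 (z (sg j)))) (vsub v (zj j))
     + / 2 * (inner (vsub (zj j) (z (sg j))) (M2 (sg j) (vsub v (zj j)))
              + inner (vsub v (zj j)) (M2 (sg j) (vsub (zj j) (z (sg j)))))).
  apply (sublevel_weak_limit g h2 gh2 Hglsc Hgc Hh2c Hh2g zj zb (fun j => fin_part (g (zj j))) Rr);
    [apply z_succ_weak_cv | | |].
  - intro j. destruct (iterate_z_ineq (sg j)) as [gz1 [E _]]. unfold zj. rewrite E. reflexivity.
  - intro j. destruct (iterate_z_ineq (sg j)) as [gz1 [E VI]]. unfold Rr, zj. rewrite E. simpl.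
    specialize (VI v a Hv).
    pose proof (convex_gradient_ineq h2 gh2 Hh2g Hh2c (z (S (sg j))) v).
    rewrite (lin_sub _ HB), inner_sub_r in VI. rewrite (inner_sub_l (gh2 _) (gh2 _)). lra.
  - assert (Hb1 : forall j, hnorm (vsub v (zj j)) <= hnorm v + Kz).
    { intro j. eapply Rle_trans; [apply hnorm_sub_le|]. specialize (HKz (S (sg j))). unfold zj. lra. }
    replace (a + h2 v - inner pb (B v) + inner pb y) with
      ((a + h2 v) - inner pb (B v) + inner pb y - 0 + / 2 * 0) by ring.
    unfold Rr. apply CV_plus; [apply CV_minus; [apply CV_plus; [apply CV_minus|]|]|].
    + apply Un_cv_const.
    + apply p_succ_weak_cv.
    + apply (weak_strong_inner_cv (fun j => p (S (sg j))) pb (fun j => B (zj j)) y Kp p_succ_weak_cv);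
        [intro; apply HKp | apply Bz_succ_strong_cv].
    + apply (gradient_diff_cv0 gh2 L2 zj (fun j => z (sg j)) (fun j => vsub v (zj j)) (hnorm v + Kz));
        auto. apply z_steps_subseq_cv0.
    + apply CV_mult; [apply Un_cv_const|].
      apply (op_cross_terms_cv0 (fun j => M2 (sg j)) (fun j => vsub (zj j) (z (sg j)))
        (fun j => vsub v (zj j)) CM (hnorm v + Kz)); auto. apply z_steps_subseq_cv0.
Qed.

Lemma cluster_x_ineq w a : ERle (f w) (Fin a) ->
  exists fb, f xs0 = Fin fb /\ fb + h1 xs0 <= a + h1 w - inner pb (A w) + inner pb (A xs0).
Proof.
  intro Hw.
  destruct (op_seq_uniform_bound M1 HM1s HM1d) as [CM [HCM HCMb]].
  destruct (strong_cv_bounded _ _ (x_strong_cv xs0 zs0 ps0 Hs0)) as [Kx HKx].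
  destruct (p_bounded xs0 zs0 ps0 Hs0) as [Kp HKp].
  set (xj := fun j => x (S (sg j))).
  set (Rr := fun j => (a + h1 w) - inner (p (sg j)) (A w) + inner (p (sg j)) (A (xj j))
     - inner (vsub (gh1 (xj j)) (gh1 (x (sg j)))) (vsub w (xj j))
     + / 2 * (inner (vsub (xj j) (x (sg j))) (M1 (sg j) (vsub w (xj j)))
              + inner (vsub w (xj j)) (M1 (sg j) (vsub (xj j) (x (sg j)))))).
  apply (sublevel_weak_limit f h1 gh1 Hflsc Hfc Hh1c Hh1g xj xs0 (fun j => fin_part (f (xj j))) Rr);
    [apply strong_cv_weak, x_succ_strong_cv | | |].
  - intro j. destruct (iterate_x_ineq (sg j)) as [fx1 [E _]]. unfold xj. rewrite E. reflexivity.
  - intro j. destruct (iterate_x_ineq (sg j)) as [fx1 [E VI]]. unfold Rr, xj. rewrite E. simpl.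
    specialize (VI w a Hw).
    pose proof (convex_gradient_ineq h1 gh1 Hh1g Hh1c (x (S (sg j))) w).
    pose proof (inner_pos (vsub w (x (S (sg j))))).
    assert (0 <= gamma / 2 * inner (vsub w (x (S (sg j)))) (vsub w (x (S (sg j)))))
      by (apply Rmult_le_pos; lra).
    rewrite (lin_sub _ HA), inner_sub_r in VI. rewrite (inner_sub_l (gh1 _) (gh1 _)). lra.
  - assert (Hb1 : forall j, hnorm (vsub w (xj j)) <= hnorm w + Kx).
    { intro j. eapply Rle_trans; [apply hnorm_sub_le|]. specialize (HKx (S (sg j))). unfold xj. lra. }
    replace (a + h1 w - inner pb (A w) + inner pb (A xs0)) with
      ((a + h1 w) - inner pb (A w) + inner pb (A xs0) - 0 + / 2 * 0) by ring.
    unfold Rr. apply CV_plus; [apply CV_minus; [apply CV_plus; [apply CV_minus|]|]|].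
    + apply Un_cv_const.
    + apply Hpw.
    + apply (weak_strong_inner_cv (fun j => p (sg j)) pb (fun j => A (xj j)) (A xs0) Kp Hpw);
        [intro; apply HKp|].
      apply (Un_cv_squeeze0 _ (fun j => nA * hnorm (vsub (xj j) xs0))); [|apply Un_cv_scal0, x_succ_strong_cv].
      intro n. rewrite Rabs_pos_eq by apply hnorm_pos. rewrite <- (lin_sub _ HA). apply HnA.
    + apply (gradient_diff_cv0 gh1 L1 xj (fun j => x (sg j)) (fun j => vsub w (xj j)) (hnorm w + Kx));
        auto. apply x_steps_subseq_cv0.
    + apply CV_mult; [apply Un_cv_const|].
      apply (op_cross_terms_cv0 (fun j => M1 (sg j)) (fun j => vsub (xj j) (x (sg j)))
        (fun j => vsub w (xj j)) CM (hnorm w + Kx)); auto. apply x_steps_subseq_cv0.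
Qed.

Lemma cluster_saddle_point : saddle_point f h1 g h2 A B b xs0 zb pb.
Proof.
  destruct Hfp as [w0 Hw0]. destruct (f w0) as [a0|] eqn:Ew0; [|congruence].
  destruct Hgp as [v0 Hv0]. destruct (g v0) as [b0|] eqn:Ev0; [|congruence].
  destruct (cluster_x_ineq w0 a0 ltac:(rewrite Ew0; simpl; lra)) as [fb [Efb _]].
  destruct (cluster_z_ineq v0 b0 ltac:(rewrite Ev0; simpl; lra)) as [gb [Egb _]].
  assert (Hr : vsub (vsub b (A xs0)) (B zb) = vzero) by (rewrite cluster_feasible; apply vsub_diag).
  intros x' z' p'. split.
  - unfold Lagr. rewrite Efb, Egb, Hr, !inner_0_r. simpl. lra.
  - unfold Lagr. rewrite Efb, Egb, Hr, inner_0_r.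
    destruct (f x') as [a|] eqn:Ex; destruct (g z') as [a'|] eqn:Ez; simpl; auto.
    destruct (cluster_x_ineq x' a ltac:(rewrite Ex; simpl; lra)) as [fb' [Efb' HX]].
    destruct (cluster_z_ineq z' a' ltac:(rewrite Ez; simpl; lra)) as [gb' [Egb' HZ]].
    rewrite Efb in Efb'. injection Efb' as <-. rewrite Egb in Egb'. injection Egb' as <-.
    autorewrite with inE in *. lra.
Qed.

End ClusterPoint.

(** ** Uniqueness of the weak cluster point *)

(* V(z1,p1) - V(z2,p2) is affine in (z^k, p^k); along a subsequence converging weakly to
   (z1, p1) its linear part vanishes in the limit. *)
Lemma lyapunov_limit_difference sg1 z1 p1 z2 p2 l1 l2 Q :
  strict_incr sg1 -> weak_cv (fun j => z (sg1 j)) z1 -> weak_cv (fun j => p (sg1 j)) p1 ->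
  Un_cv (lyapunov xs0 z1 p1) l1 -> Un_cv (lyapunov xs0 z2 p2) l2 ->
  Un_cv (fun k => c k * Mnorm2 (M2 k) (vsub z1 z2)) Q ->
  l1 - l2 = - inner (vsub p1 p2) (vsub p1 p2) - Q.
Proof.
  intros Hsg Hzw Hpw Hl1 Hl2 HQ.
  destruct z_bounded as [Kz HKz].
  set (e := vsub z1 z2). set (pi := vsub p1 p2).
  set (lin := fun k => - 2 * inner (vsub (p k) p1) pi - 2 * (c k * inner (vsub (z k) z1) (M2 k e))).
  assert (Eq : forall k, lyapunov xs0 z1 p1 k - lyapunov xs0 z2 p2 k
                         = lin k - inner pi pi - c k * Mnorm2 (M2 k) e).
  { intro k. unfold lyapunov, lin.
    pose proof (Mnorm2_sub_expand (fun v => v) (p k) p1 p2 ltac:(split; auto) ltac:(intros ? ?; auto))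
      as Q1.
    pose proof (Mnorm2_sub_expand (M2 k) (z k) z1 z2 (in_Splus_linear _ (HM2s k))
      (in_Splus_self_adjoint _ (HM2s k))) as Q2.
    fold e pi in Q1, Q2. unfold Mnorm2 in *. nra. }
  assert (Hlin : Un_cv (fun j => lin (sg1 j)) 0).
  { replace 0 with (0 - 0) by ring. unfold lin. apply CV_minus; apply Un_cv_scal0.
    - apply (Un_cv_ext (fun j => inner (p (sg1 j)) pi - inner p1 pi)); [intro; autorewrite with inE; ring|].
      apply Un_cv_sub_limit, Hpw.
    - apply (Un_cv_bounded_mul0 (fun j => c (sg1 j)) _ (2 * gamma / nA ^ 2)).
      { intro n. rewrite Rabs_pos_eq by (left; apply step_pos). apply step_ub. }
      apply (antitone_op_weak_null M2 (fun j => vsub (z (sg1 j)) z1) sg1 e (Kz + hnorm z1)); auto.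
      + intro w. rewrite inner_0_l. apply (Un_cv_ext (fun j => inner (z (sg1 j)) w - inner z1 w)).
        { intro; autorewrite with inE; ring. }
        apply Un_cv_sub_limit, Hzw.
      + intro j. eapply Rle_trans; [apply hnorm_sub_le|]. specialize (HKz (sg1 j)). lra. }
  apply (UL_sequence (fun j => lyapunov xs0 z1 p1 (sg1 j) - lyapunov xs0 z2 p2 (sg1 j))).
  - apply CV_minus; apply Un_cv_subseq; auto.
  - apply (Un_cv_ext (fun j => lin (sg1 j) - inner pi pi - c (sg1 j) * Mnorm2 (M2 (sg1 j)) e));
      [intro j; rewrite Eq; reflexivity|].
    replace (- inner pi pi - Q) with (0 - inner pi pi - Q) by ring.
    apply CV_minus; [apply CV_minus; [exact Hlin | apply Un_cv_const]|].
    apply (Un_cv_subseq (fun k => c k * Mnorm2 (M2 k) e)); auto.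
Qed.

Lemma weak_cluster_unique sg1 z1 p1 sg2 z2 p2 :
  strict_incr sg1 -> weak_cv (fun j => z (sg1 j)) z1 -> weak_cv (fun j => p (sg1 j)) p1 ->
  strict_incr sg2 -> weak_cv (fun j => z (sg2 j)) z2 -> weak_cv (fun j => p (sg2 j)) p2 ->
  z1 = z2 /\ p1 = p2.
Proof.
  intros Hs1 Hz1 Hp1 Hs2 Hz2 Hp2.
  pose proof (cluster_saddle_point sg1 z1 p1 Hs1 Hz1 Hp1) as S1.
  pose proof (cluster_saddle_point sg2 z2 p2 Hs2 Hz2 Hp2) as S2.
  destruct (lyapunov_cv xs0 z1 p1 S1) as [[l1 Hl1] _].
  destruct (lyapunov_cv xs0 z2 p2 S2) as [[l2 Hl2] _].
  set (e := vsub z1 z2).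
  assert (Hq0 : forall k, 0 <= c k * Mnorm2 (M2 k) e).
  { intro k. apply Rmult_le_pos; [left; apply step_pos | apply in_Splus_Mnorm2_pos; auto]. }
  destruct (Un_cv_antitone_bounded_below (fun k => c k * Mnorm2 (M2 k) e)) as [Q HQ]; auto.
  { intro k. apply Rmult_le_compat; [left; apply step_pos | apply in_Splus_Mnorm2_pos; auto | |].
    - destruct (Hc k); lra.
    - pose proof (HM2d k e). lra. }
  assert (HQ' : Un_cv (fun k => c k * Mnorm2 (M2 k) (vsub z2 z1)) Q).
  { apply (Un_cv_ext (fun k => c k * Mnorm2 (M2 k) e)); auto. intro k. unfold e.
    replace (vsub z2 z1) with (vscal (-1) (vsub z1 z2)) by vext. unfold Mnorm2.
    rewrite (lin_scal _ (in_Splus_linear _ (HM2s k))). autorewrite with inE. f_equal. ring. }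
  (* the two differences of limits are equal up to sign, so both quadratic terms vanish *)
  pose proof (lyapunov_limit_difference sg1 z1 p1 z2 p2 l1 l2 Q Hs1 Hz1 Hp1 Hl1 Hl2 HQ) as E1.
  pose proof (lyapunov_limit_difference sg2 z2 p2 z1 p1 l2 l1 Q Hs2 Hz2 Hp2 Hl2 Hl1 HQ') as E2.
  replace (inner (vsub p2 p1) (vsub p2 p1)) with (inner (vsub p1 p2) (vsub p1 p2)) in E2
    by (rewrite !inner_vsub_expand, (inner_sym p2 p1); ring).
  assert (HQp : 0 <= Q) by (apply (Un_cv_ge_eventually _ _ _ 0 HQ); intros; auto).
  pose proof (inner_pos (vsub p1 p2)).
  split; [| apply vsub_eq0, inner_def; lra].
  apply vsub_eq0, (vanishing_direction_trivial e).
  - replace Q with 0 in HQ by lra. exact HQ.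
  - unfold e. rewrite (lin_sub _ HB), (cluster_feasible sg1 z1 Hs1 Hz1),
      (cluster_feasible sg2 z2 Hs2 Hz2). apply vsub_diag.
Qed.

Lemma weak_cluster_subseq tau : strict_incr tau -> exists rho, strict_incr rho /\ exists z' p',
  weak_cv (fun j => z (tau (rho j))) z' /\ weak_cv (fun j => p (tau (rho j))) p'.
Proof.
  intro Ht. destruct z_bounded as [Kz HKz]. destruct (p_bounded xs0 zs0 ps0 Hs0) as [Kp HKp].
  destruct (weak_seq_compact (fun n => z (tau n)) Kz (fun n => HKz (tau n))) as [s1 [Hs1 [z' Hz']]].
  destruct (weak_seq_compact (fun n => p (tau (s1 n))) Kp (fun n => HKp (tau (s1 n))))
    as [s2 [Hs2 [p' Hp']]].
  exists (fun j => s1 (s2 j)). split; [apply strict_incr_comp; auto|].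
  exists z', p'. split; auto. apply (weak_cv_subseq (fun j => z (tau (s1 j))) z' s2 Hs2 Hz').
Qed.


Lemma iterates_weak_cv : exists zb pb, saddle_point f h1 g h2 A B b xs0 zb pb /\
  weak_cv x xs0 /\ weak_cv z zb /\ weak_cv p pb.
Proof.
  destruct (weak_cluster_subseq (fun n => n) strict_incr_id) as [r0 [Hr0 [zb [pb [Hzb Hpb]]]]].
  exists zb, pb. split; [apply (cluster_saddle_point r0 zb pb Hr0 Hzb Hpb)|].
  split; [apply strong_cv_weak, (x_strong_cv xs0 zs0 ps0 Hs0)|].
  (* a subsequence staying away from the cluster point in direction w has a weakly
     convergent subsequence, whose limit must be the same cluster point *)
  split; intro w; apply NNPP; intro Hn; destruct (Un_cv_not_frequent _ _ Hn) as [e [He Hf]].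
  - destruct (frequent_subseq (fun _ n => e <= Rabs (inner (z n) w - inner zb w))) as [tau [Ht Htau]];
      [intros _ N; apply Hf|].
    destruct (weak_cluster_subseq tau Ht) as [rho [Hrho [z' [p' [Hz' Hp']]]]].
    destruct (weak_cluster_unique r0 zb pb (fun j => tau (rho j)) z' p' Hr0 Hzb Hpb
                (strict_incr_comp _ _ Ht Hrho) Hz' Hp') as [<- _].
    destruct (Hz' w e He) as [N HN]. specialize (HN N (le_n _)). specialize (Htau (rho N)).
    unfold Rdist in HN. lra.
  - destruct (frequent_subseq (fun _ n => e <= Rabs (inner (p n) w - inner pb w))) as [tau [Ht Htau]];
      [intros _ N; apply Hf|].
    destruct (weak_cluster_subseq tau Ht) as [rho [Hrho [z' [p' [Hz' Hp']]]]].
    destruct (weak_cluster_unique r0 zb pb (fun j => tau (rho j)) z' p' Hr0 Hzb Hpb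
                (strict_incr_comp _ _ Ht Hrho) Hz' Hp') as [_ <-].
    destruct (Hp' w e He) as [N HN]. specialize (HN N (le_n _)). specialize (Htau (rho N)).
    unfold Rdist in HN. lra.
Qed.

End Limit.
End ProximalAMA.

Theorem mainTheorem1
  (H G K : Hilbert)
  (f : H -> ER) (g : G -> ER) (h1 : H -> R) (h2 : G -> R)
  (gh1 : H -> H) (gh2 : G -> G)
  (gamma L1 L2 : R) (A : H -> K) (B : G -> K) (b : K) (nA : R)
  (M1 : nat -> H -> H) (M2 : nat -> G -> G) (c : nat -> R) (eps : R)
  (x : nat -> H) (z : nat -> G) (p : nat -> K)
  (Hgamma : 0 < gamma)
  (Hf : proper f /\ convex f /\ lsc f /\ strongly_convex gamma f)
  (Hg : proper g /\ convex g /\ lsc g)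
  (Hh1 : convex_real h1 /\ frechet_gradient h1 gh1 /\ lipschitz L1 gh1)
  (Hh2 : convex_real h2 /\ frechet_gradient h2 gh2 /\ lipschitz L2 gh2)
  (HL1 : 0 <= L1) (HL2 : 0 <= L2)
  (HA : bounded_linear A) (HB : bounded_linear B)
  (HA0 : exists u : H, A u <> vzero)
  (HnA : opnorm_is A nA)
  (Hsaddle : exists xs zs ps, saddle_point f h1 g h2 A B b xs zs ps)
  (HM1 : forall k, in_Splus (M1 k) /\ in_Splus (op_minus_id (M1 k) (L1 / 2))
                   /\ loewner_ge (M1 k) (M1 (S k)))
  (HM2 : forall k, in_Splus (M2 k) /\ in_Splus (op_minus_id (M2 k) (L2 / 2))
                   /\ loewner_ge (M2 k) (M2 (S k)))
  (Heps : 0 < eps < gamma / nA ^ 2)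
  (Hc : forall k, c (S k) <= c k /\ eps <= c k <= 2 * gamma / nA ^ 2 - eps)
  (Hcase : (exists alpha, 0 < alpha /\
              forall k, in_Palpha alpha (op_minus_id (M2 k) (L2 / 2)))
        \/ (exists Bs : K -> G, is_adjoint B Bs /\
              exists beta, 0 < beta /\ in_Palpha beta (fun v => Bs (B v))))
  (Hiter : prox_AMA f g gh1 gh2 A B b M1 M2 c x z p) :
  exists xs zs ps,
    saddle_point f h1 g h2 A B b xs zs ps /\
    weak_cv x xs /\ weak_cv z zs /\ weak_cv p ps.
Proof.
  destruct Hf as [Hfp [Hfc [Hflsc Hfsc]]].
  destruct Hg as [Hgp [Hgc Hglsc]].
  destruct Hh1 as [Hh1c [Hh1g Hh1l]].
  destruct Hh2 as [Hh2c [Hh2g Hh2l]].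
  destruct Hsaddle as [xs0 [zs0 [ps0 Hs0]]].
  destruct (bounded_linear_bound B HB) as [CB [_ HCB]].
  pose proof (opnorm_bound A nA (proj1 HA) HnA) as HnA'.
  pose proof (opnorm_pos A nA (proj1 HA) HnA HA0) as HnApos.
  assert (Heps2 : eps * nA ^ 2 < gamma).
  { destruct Heps as [_ He]. assert (0 < nA ^ 2) by (apply pow_lt; lra).
    apply Rmult_lt_compat_r with (r := nA ^ 2) in He; [|lra].
    replace (gamma / nA ^ 2 * nA ^ 2) with gamma in He by (field; lra). lra. }
  exists xs0.
  eapply (iterates_weak_cv f g h1 h2 gh1 gh2 gamma L1 L2 A B b nA M1 M2 c eps x z p);
    try apply convex_with_modulus_0; try apply strongly_convex_with_modulus;
    try apply HM1; try apply HM2; try apply HA; try apply HB; try apply Heps; eauto.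
Qed.
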